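(* Let the sequences be generated by SONATA in the setting below, under the additional assumptions (A1) $\|\nabla F(\mathbf{x})\|\le L_F<\infty$ for all $\mathbf{x}\in X$, (A2) every subgradient $\boldsymbol\xi\in\partial G(\mathbf{x})$ satisfies $\|\boldsymbol\xi\|\le L_G<\infty$ for all $\mathbf{x}\in X$, and (A3) $\gamma^k\in(0,1]$ with $\sum_k\gamma^k=\infty$, $\sum_k(\gamma^k)^2<\infty$. Then for all $i=1,\dots,I$: (a) $\phi_{lb}\mathbf{1}\le\boldsymbol\phi^k\le\phi_{ub}\mathbf{1}$ for all $k$, with $\phi_{lb}\ge\kappa^{2(I-1)B}>0$ and $\phi_{ub}\le I-\kappa^{2(I-1)B}$; (b) $\sup_k\|\mathbf{y}_{(i)}^k-\bar{\mathbf{y}}_\phi^k\|<\infty$; (c) $\sup_k\|\mathbf{x}_{(i)}^k-\widetilde{\mathbf{x}}_i^k\|<\infty$.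
   Context: Problem: minimize $V(\mathbf{x})\triangleq F(\mathbf{x})+G(\mathbf{x})$, $F=\sum_{i=1}^If_i$, over $\mathbf{x}\in X$, where $X\subseteq\mathbb{R}^m$ is nonempty closed convex; each $f_i:O\to\mathbb{R}$ is $C^1$ on an open set $O\supseteq X$ with $\nabla f_i$ $L_i$-Lipschitz on $X$; $G:O\to\mathbb{R}$ is convex; $V$ is bounded below on $X$. Network: digraphs $G^k=(\{1,\dots,I\},E^k)$, $(j,i)\in E^k$ meaning $j$ can send to $i$, $B$-strongly connected ($\bigcup_{t=k}^{k+B-1}E^t$ strongly connected for every $k$). $\mathbf{A}^k=(a_{ij}^k)$: $a_{ij}^k=0$ if $j\ne i$ and $(j,i)\notin E^k$, $a_{ij}^k\ge\kappa$ if $(j,i)\in E^k$, $a_{ii}^k\ge\kappa$ ($\kappa>0$), nonnegative with $\mathbf{1}^T\mathbf{A}^k=\mathbf{1}^T$. Assumption III.14 on $\widetilde f_i:O\times O\to\mathbb{R}$: $\widetilde f_i(\cdot|\mathbf{x})$ is $\tau_i$-strongly convex on $X$ for all $\mathbf{x}\in X$; $C^1$ on $O$ with $\nabla\widetilde f_i(\mathbf{x}|\mathbf{x})=\nabla f_i(\mathbf{x})$; $\nabla\widetilde f_i(\mathbf{x}|\cdot)$ is $\widetilde L_i$-Lipschitz on $X$. SONATA: initialize $\mathbf{x}_{(i)}^0\in X$, $\phi_{(i)}^0=1$, $\mathbf{y}_{(i)}^0=\nabla f_i(\mathbf{x}_{(i)}^0)$; at iteration $k$, $\widetilde{\mathbf{x}}_i^k=\operatorname{argmin}_{\mathbf{x}\in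 X}\{\widetilde f_i(\mathbf{x}|\mathbf{x}_{(i)}^k)+(I\mathbf{y}_{(i)}^k-\nabla f_i(\mathbf{x}_{(i)}^k))^T(\mathbf{x}-\mathbf{x}_{(i)}^k)+G(\mathbf{x})\}$, $\mathbf{x}_{(i)}^{k+1/2}=\mathbf{x}_{(i)}^k+\gamma^k(\widetilde{\mathbf{x}}_i^k-\mathbf{x}_{(i)}^k)$, $\phi_{(i)}^{k+1}=\sum_ja_{ij}^k\phi_{(j)}^k$, $\mathbf{x}_{(i)}^{k+1}=\frac{1}{\phi_{(i)}^{k+1}}\sum_ja_{ij}^k\phi_{(j)}^k\mathbf{x}_{(j)}^{k+1/2}$, $\mathbf{y}_{(i)}^{k+1}=\frac{1}{\phi_{(i)}^{k+1}}\sum_ja_{ij}^k\phi_{(j)}^k\mathbf{y}_{(j)}^k+\frac{1}{\phi_{(i)}^{k+1}}(\nabla f_i(\mathbf{x}_{(i)}^{k+1})-\nabla f_i(\mathbf{x}_{(i)}^k))$. $\boldsymbol\phi^k=(\phi_{(i)}^k)_i$, $\phi_{lb}=\inf_k\min_i\phi_{(i)}^k$, $\phi_{ub}=\sup_k\max_i\phi_{(i)}^k$, $\bar{\mathbf{y}}_\phi^k\triangleq\frac1I\sum_j\phi_{(j)}^k\mathbf{y}_{(j)}^k$. *)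

From Stdlib Require Import Reals Relations.
From mathcomp Require Import all_boot.
Set Implicit Arguments.
Unset Strict Implicit.
Unset Printing Implicit Defensive.
Open Scope R_scope.

Definition vec (m : nat) := 'I_m -> R.

Definition rsum (n : nat) (f : 'I_n -> R) : R := \big[Rplus/0]_(i < n) f i.

Definition vadd m (x y : vec m) : vec m := fun j => x j + y j.
Definition vsub m (x y : vec m) : vec m := fun j => x j - y j.
Definition vscal m (a : R) (x : vec m) : vec m := fun j => a * x j.
Definition vsum m n (f : 'I_n -> vec m) : vec m := fun j => rsum (fun i => f i j).
Definition dot m (x y : vec m) : R := rsum (fun j => x j * y j).
Definition vnorm m (x : vec m) : R := sqrt (dot x x).
Definition vcomb m (t : R) (x y : vec m) : vec m := vadd (vscal (1 - t) x) (vscal t y).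

Definition is_open m (O : vec m -> Prop) : Prop :=
  forall x, O x -> exists r, 0 < r /\ forall y, vnorm (vsub y x) < r -> O y.

Definition is_closed m (X : vec m -> Prop) : Prop :=
  forall (u : nat -> vec m) (l : vec m), (forall n, X (u n)) ->
    (forall eps, 0 < eps -> exists N, forall n, (N <= n)%nat -> vnorm (vsub (u n) l) < eps) ->
    X l.

Definition is_convex_set m (X : vec m -> Prop) : Prop :=
  forall x y t, X x -> X y -> 0 <= t <= 1 -> X (vcomb t x y).

Definition has_gradient_on m (O : vec m -> Prop) (f : vec m -> R) (g : vec m -> vec m) : Prop :=
  forall x, O x -> forall eps, 0 < eps -> exists delta, 0 < delta /\
    forall y, O y -> vnorm (vsub y x) < delta ->
      Rabs (f y - f x - dot (g x) (vsub y x)) <= eps * vnorm (vsub y x).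

Definition continuous_on m n (O : vec m -> Prop) (g : vec m -> vec n) : Prop :=
  forall x, O x -> forall eps, 0 < eps -> exists delta, 0 < delta /\
    forall y, O y -> vnorm (vsub y x) < delta -> vnorm (vsub (g y) (g x)) < eps.

Definition C1_on m (O : vec m -> Prop) (f : vec m -> R) (g : vec m -> vec m) : Prop :=
  has_gradient_on O f g /\ continuous_on O g.

Definition lipschitz_on m n (X : vec m -> Prop) (g : vec m -> vec n) (L : R) : Prop :=
  forall x y, X x -> X y -> vnorm (vsub (g x) (g y)) <= L * vnorm (vsub x y).

Definition convex_fun_on m (O : vec m -> Prop) (G : vec m -> R) : Prop :=
  forall x y t, O x -> O y -> 0 <= t <= 1 -> O (vcomb t x y) ->
    G (vcomb t x y) <= (1 - t) * G x + t * G y.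

Definition strongly_convex_on m (X : vec m -> Prop) (h : vec m -> R) (tau : R) : Prop :=
  0 < tau /\
  forall x y t, X x -> X y -> 0 <= t <= 1 ->
    h (vcomb t x y) <= (1 - t) * h x + t * h y
                       - tau / 2 * t * (1 - t) * (vnorm (vsub x y)) ^ 2.

Definition subgradient m (O : vec m -> Prop) (G : vec m -> R) (x xi : vec m) : Prop :=
  forall y, O y -> G y >= G x + dot xi (vsub y x).

(* E k j i : at time k, (j,i) is an edge, i.e. j can send to i *)
Definition strongly_connected n (Rel : 'I_n -> 'I_n -> Prop) : Prop :=
  forall i j, i <> j -> clos_trans _ Rel i j.

Definition B_strongly_connected n (E : nat -> 'I_n -> 'I_n -> Prop) (B : nat) : Prop :=
  forall k, strongly_connected (fun j i => exists t, (k <= t)%nat /\ (t < k + B)%nat /\ E t j i).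

(* a k i j = a_{ij}^k *)
Definition admissible_weights n (E : nat -> 'I_n -> 'I_n -> Prop)
    (a : nat -> 'I_n -> 'I_n -> R) (kappa : R) : Prop :=
  forall k,
    (forall i j, 0 <= a k i j) /\
    (forall i j, j <> i -> ~ E k j i -> a k i j = 0) /\
    (forall i j, E k j i -> kappa <= a k i j) /\
    (forall i, kappa <= a k i i) /\
    (forall j, rsum (fun i => a k i j) = 1).

Definition sonata_obj m nI (ft : 'I_nI -> vec m -> vec m -> R) (gf : 'I_nI -> vec m -> vec m)
    (G : vec m -> R) (i : 'I_nI) (xk yk : vec m) (z : vec m) : R :=
  ft i z xk + dot (vsub (vscal (INR nI) yk) (gf i xk)) (vsub z xk) + G z.

From HB Require Import structures.
From Stdlib Require Import Reals Relations Lra Lia FunctionalExtensionality Classical.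
From mathcomp Require Import all_boot zify.
Open Scope R_scope.
Set Implicit Arguments.
Unset Strict Implicit.

(* Part (a): the push-sum weights [phi k] evolve by column-stochastic matrices, so
   their total mass stays [I]; by B-strong connectivity every entry of a product of
   [T = (I-1)B] consecutive weight matrices is at least [kappa^T], hence
   [phi >= kappa^T >= kappa^(2T)], and [phi_i <= I - kappa^(2T)] because some other
   agent also carries weight at least [kappa^(2T)].

   Parts (b), (c): with the row-stochastic weights [W_ij = a_ij phi_j / phi'_i], both
   [x] and [y] follow perturbed consensus recursions [z' = W z + d].  Their
   coordinatewise spreads grow by at most twice the perturbation per step and
   contract by the factor [1 - kappa^(2T)/I] over every window of [T] steps.  The
   perturbation of [x] is [gamma] times the largest gap [|x~_i - x_i|], that of [y]
   is controlled by the spread of [x] through the Lipschitz gradients.  Optimality of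
   [x~_i], strong convexity, a subgradient of [G] and the tracking invariant
   [sum_i phi_i y_i = sum_i grad f_i(x_i)] bound the gap linearly in the two
   spreads.  As [gamma -> 0], the Lyapunov function [spread x + eps * spread y]
   eventually contracts over windows, so both spreads stay bounded, and (b), (c)
   follow. *)

(** * Finite sums, maxima and spreads *)

HB.instance Definition _ :=
  Monoid.isComLaw.Build R 0 Rplus (fun a b c => esym (Rplus_assoc a b c)) Rplus_comm Rplus_0_l.

Lemma eq_rsum n (f g : 'I_n -> R) : (forall i, f i = g i) -> rsum f = rsum g.
Proof. by move=> fg; apply: eq_bigr => i _. Qed.

Lemma rsumD n (f g : 'I_n -> R) : rsum (fun i => f i + g i) = rsum f + rsum g.
Proof. exact: big_split. Qed.

Lemma rsum_mull n c (f : 'I_n -> R) : rsum (fun i => c * f i) = c * rsum f.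
Proof.
apply: (big_rec2 (fun u v => u = c * v)); first by ring.
by move=> i u v _ ->; ring.
Qed.

Lemma rsum_mulr n c (f : 'I_n -> R) : rsum (fun i => f i * c) = rsum f * c.
Proof. by rewrite Rmult_comm -rsum_mull; apply: eq_rsum => i; ring. Qed.

Lemma rsumB n (f g : 'I_n -> R) : rsum (fun i => f i - g i) = rsum f - rsum g.
Proof.
rewrite (eq_rsum (g := fun i => f i + -1 * g i)); last by move=> i; ring.
by rewrite rsumD rsum_mull; ring.
Qed.

Lemma rsum0 n : rsum (fun _ : 'I_n => 0) = 0.
Proof. by apply: (big_rec (fun u => u = 0)) => // i u _ ->; ring. Qed.

Lemma rsum_const n c : rsum (fun _ : 'I_n => c) = INR n * c.
Proof.
elim: n => [|n IH]; first by rewrite /rsum big_ord0 /=; ring.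
rewrite /rsum big_ord_recr /= -/(rsum _) IH.
by change (INR n * c + c = INR n.+1 * c); rewrite S_INR; ring.
Qed.

Lemma rsum_le n (f g : 'I_n -> R) : (forall i, f i <= g i) -> rsum f <= rsum g.
Proof.
move=> fg; apply: (big_rec2 (fun u v => u <= v)); first lra.
by move=> i u v _ uv; have := fg i; lra.
Qed.

Lemma rsum_ge0 n (f : 'I_n -> R) : (forall i, 0 <= f i) -> 0 <= rsum f.
Proof. by move=> f0; rewrite -(rsum0 n); apply: rsum_le. Qed.

Lemma Rabs_rsum_le n (f : 'I_n -> R) : Rabs (rsum f) <= rsum (fun i => Rabs (f i)).
Proof.
apply: (big_rec2 (fun u v => Rabs u <= v)); first by rewrite Rabs_R0; lra.
by move=> i u v _ uv; have := Rabs_triang (f i) u; lra.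
Qed.

Lemma rsumD1 n (f : 'I_n -> R) i :
  rsum f = f i + rsum (fun j => if j != i then f j else 0).
Proof. by rewrite /rsum (bigD1 i) //= big_mkcond. Qed.

Lemma rsum_ge_term n (f : 'I_n -> R) i : (forall j, 0 <= f j) -> f i <= rsum f.
Proof.
move=> f0; rewrite (rsumD1 f i).
have : 0 <= rsum (fun j => if j != i then f j else 0).
  by apply: rsum_ge0 => j; case: (j != i) => //; lra.
lra.
Qed.

Lemma rsum_delta n (g : 'I_n -> R) i : rsum (fun j => (if j == i then 1 else 0) * g j) = g i.
Proof.
rewrite (rsumD1 _ i) eqxx (eq_rsum (g := fun _ => 0)) ?rsum0; first ring.
by move=> j; case: (j =P i) => [->|/eqP ji]; rewrite ?eqxx //=; ring.
Qed.

Lemma exchange_rsum n p (f : 'I_n -> 'I_p -> R) :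
  rsum (fun i => rsum (fun j => f i j)) = rsum (fun j => rsum (fun i => f i j)).
Proof. exact: exchange_big. Qed.

Lemma rsum_recr n (f : 'I_n.+1 -> R) :
  rsum f = rsum (fun j : 'I_n => f (widen_ord (leqnSn n) j)) + f ord_max.
Proof. exact: big_ord_recr. Qed.

Lemma rsum_eq0_ge0 n (f : 'I_n -> R) : (forall j, 0 <= f j) -> rsum f = 0 -> forall j, f j = 0.
Proof. by move=> f0 s0 j; have := rsum_ge_term j f0; have := f0 j; lra. Qed.

Lemma rsum_wconst n (q : 'I_n -> R) c : rsum q = 1 -> rsum (fun j => q j * c) = c.
Proof. by move=> q1; rewrite rsum_mulr q1; ring. Qed.

Fixpoint psum (f : nat -> R) (n : nat) : R :=
  match n with 0 => 0 | n'.+1 => psum f n' + f n' end.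

Lemma psum_ge0 f n : (forall t, 0 <= f t) -> 0 <= psum f n.
Proof. by move=> f0; elim: n => [|n IH] /=; [lra | have := f0 n; lra]. Qed.

Lemma psum_le f g n : (forall t, (t < n)%N -> f t <= g t) -> psum f n <= psum g n.
Proof.
elim: n => [|n IH] fg /=; first lra.
by have := fg n (ltnSn n); have := IH (fun t lt => fg t (ltnW lt)); lra.
Qed.

Lemma psum_mull c f n : psum (fun t => c * f t) n = c * psum f n.
Proof. by elim: n => [|n IH] /=; [ring | rewrite IH; ring]. Qed.

Lemma psumD f g n : psum (fun t => f t + g t) n = psum f n + psum g n.
Proof. by elim: n => [|n IH] /=; [ring | rewrite IH; ring]. Qed.

Lemma psum_const c n : psum (fun _ => c) n = INR n * c.
Proof.
elim: n => [|n IH] /=; first ring.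
by rewrite IH; change (INR n * c + c = INR n.+1 * c); rewrite S_INR; ring.
Qed.

Lemma psum_le_prefix f n n' : (forall t, 0 <= f t) -> (n <= n')%N -> psum f n <= psum f n'.
Proof.
move=> f0 nn'; rewrite -(subnKC nn'); elim: (n' - n)%N => [|d IH]; first by rewrite addn0; lra.
by rewrite addnS /=; have := f0 (n + d)%N; lra.
Qed.

Lemma exists_argmax n (z : 'I_n -> R) : 'I_n -> exists jM, forall j, z j <= z jM.
Proof.
move=> i0.
suff [jM HjM] : exists jM, forall j, j \in enum 'I_n -> z j <= z jM.
  by exists jM => j; apply: HjM; rewrite mem_enum.
elim: (enum 'I_n) => [|j0 s [jM HjM]]; first by exists i0.
case: (Rle_dec (z j0) (z jM)) => le.
  by exists jM => j; rewrite in_cons => /orP [/eqP ->|/HjM].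
exists j0 => j; rewrite in_cons => /orP [/eqP ->|/HjM]; lra.
Qed.

(* The default value 0 of the fold makes [bmax] the maximum of [F] and [0]. *)
Definition bmax n (F : 'I_n -> R) := \big[Rmax/0]_(i < n) F i.

Lemma bmax_ge0 n (F : 'I_n -> R) : 0 <= bmax F.
Proof.
apply: (big_rec (fun u => 0 <= u)); first lra.
by move=> i u _ u0; have := Rmax_r (F i) u; lra.
Qed.

Lemma bmax_lub n (F : 'I_n -> R) c : 0 <= c -> (forall i, F i <= c) -> bmax F <= c.
Proof.
move=> c0 Fc; apply: (big_rec (fun u => u <= c)) => // i u _ uc.
exact: Rmax_lub.
Qed.

Lemma le_bmax n (F : 'I_n -> R) i : F i <= bmax F.
Proof.
rewrite /bmax unlock.
have : i \in index_enum 'I_n by rewrite mem_index_enum.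
elim: (index_enum 'I_n) => [|j s IH] //=.
rewrite in_cons => /orP [/eqP <-|/IH Fi]; first exact: Rmax_l.
exact: Rle_trans Fi (Rmax_r _ _).
Qed.

Definition spread n (z : 'I_n -> R) := bmax (fun i => bmax (fun j => z i - z j)).

Lemma spread_ge n (z : 'I_n -> R) i j : z i - z j <= spread z.
Proof. exact: Rle_trans (le_bmax _ j) (le_bmax (fun i => bmax (fun j => z i - z j)) i). Qed.

Lemma spread_lub n (z : 'I_n -> R) c : 0 <= c -> (forall i j, z i - z j <= c) -> spread z <= c.
Proof. by move=> c0 zc; apply: bmax_lub => // i; apply: bmax_lub. Qed.

Lemma Rle_div_r a b c : 0 < b -> a * b <= c -> a <= c / b.
Proof.
move=> b0 abc; rewrite (_ : a = a * b / b); last by field; lra.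
by apply: Rmult_le_compat_r => //; left; apply: Rinv_0_lt_compat.
Qed.

Lemma Rle_div_l a b c : 0 < b -> a <= c * b -> a / b <= c.
Proof.
move=> b0 acb; rewrite (_ : c = c * b / b); last by field; lra.
by apply: Rmult_le_compat_r => //; left; apply: Rinv_0_lt_compat.
Qed.

Definition vspread n m (z : 'I_n -> vec m) := bmax (fun c => spread (fun j => z j c)).

Lemma vspread_ge0 n m (z : 'I_n -> vec m) : 0 <= vspread z.
Proof. exact: bmax_ge0. Qed.

Lemma spread_le_vspread n m (z : 'I_n -> vec m) c : spread (fun j => z j c) <= vspread z.
Proof. exact: (le_bmax (fun c => spread (fun j => z j c))). Qed.

Lemma vspread_ge n m (z : 'I_n -> vec m) c i j : z i c - z j c <= vspread z.
Proof. exact: Rle_trans (spread_ge _ i j) (spread_le_vspread z c). Qed.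

Lemma Rabs_le_inv x a : Rabs x <= a -> - a <= x <= a.
Proof. by move=> xa; have := Rle_abs x; have := Rle_abs (- x); rewrite Rabs_Ropp; lra. Qed.

Lemma Rabs_wavg_sub_le_spread n (q z : 'I_n -> R) i :
  (forall j, 0 <= q j) -> rsum q = 1 -> Rabs (rsum (fun j => q j * z j) - z i) <= spread z.
Proof.
move=> q0 q1.
have -> : rsum (fun j => q j * z j) - z i = rsum (fun j => q j * (z j - z i)).
  rewrite -[X in _ - X = _](rsum_wconst (z i) q1) -rsumB.
  by apply: eq_rsum => j; ring.
apply: Rabs_le; split.
  rewrite -{1}(rsum_wconst (- spread z) q1); apply: rsum_le => j.
  by apply: Rmult_le_compat_l => //; have := spread_ge z i j; lra.
rewrite -(rsum_wconst (spread z) q1); apply: rsum_le => j.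
by apply: Rmult_le_compat_l => //; apply: spread_ge.
Qed.

Lemma Rabs_wavg_le n (q r : 'I_n -> R) c :
  (forall j, 0 <= q j) -> rsum q = 1 -> (forall j, Rabs (r j) <= c) ->
  Rabs (rsum (fun j => q j * r j)) <= c.
Proof.
move=> q0 q1 rc; apply: Rle_trans (Rabs_rsum_le _) _.
rewrite -(rsum_wconst c q1); apply: rsum_le => j.
rewrite Rabs_mult Rabs_right; last exact: Rle_ge.
exact: Rmult_le_compat_l.
Qed.

(* Each row puts weight at least [dl] on the minimum of [z], so its average lies
   at least [dl * (max z - min z)] below the maximum. *)
Lemma spread_avg_step n (q : 'I_n -> 'I_n -> R) (z z' : 'I_n -> R) dl c :
  (forall i j, 0 <= q i j) -> (forall i, rsum (q i) = 1) -> (forall i j, dl <= q i j) ->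
  (forall i, Rabs (z' i - rsum (fun j => q i j * z j)) <= c) ->
  forall i i', z' i - z' i' <= (1 - dl) * spread z + 2 * c.
Proof.
move=> q0 q1 qdl z'c i i'.
have [jM zM] := exists_argmax z i.
have [jm zm] := exists_argmax (fun j => - z j) i.
have spr := spread_ge z jM jm.
have dl1 : dl <= 1 by have := qdl i jm; have := rsum_ge_term jm (q0 i); rewrite q1; lra.
have up : rsum (fun j => q i j * z j) <= z jM - dl * (z jM - z jm).
  have -> : rsum (fun j => q i j * z j) = z jM - rsum (fun j => q i j * (z jM - z j)).
    by rewrite -[X in _ = X - _](rsum_wconst (z jM) (q1 i)) -rsumB; apply: eq_rsum => j; ring.
  have : q i jm * (z jM - z jm) <= rsum (fun j => q i j * (z jM - z j)).
    apply: (rsum_ge_term (f := fun j => q i j * (z jM - z j))) => j.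
    by apply: Rmult_le_pos => //; have := zM j; lra.
  have := qdl i jm; have := zM jm; nra.
have low : z jm <= rsum (fun j => q i' j * z j).
  rewrite -{1}(rsum_wconst (z jm) (q1 i')); apply: rsum_le => j.
  by apply: Rmult_le_compat_l => //; have := zm j; lra.
have := Rabs_le_inv (z'c i); have := Rabs_le_inv (z'c i').
have : (1 - dl) * (z jM - z jm) <= (1 - dl) * spread z by apply: Rmult_le_compat_l; lra.
lra.
Qed.

Lemma dot_ge0 m (v : vec m) : 0 <= dot v v.
Proof. by apply: rsum_ge0 => j; nra. Qed.

Lemma vnorm_ge0 m (v : vec m) : 0 <= vnorm v.
Proof. exact: sqrt_pos. Qed.

Lemma Rabs_coord_le_vnorm m (v : vec m) j : Rabs (v j) <= vnorm v.
Proof.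
rewrite /vnorm -(sqrt_Rsqr_abs (v j)); apply: sqrt_le_1_alt.
by rewrite /Rsqr; apply: (rsum_ge_term (f := fun j => v j * v j)) => i; nra.
Qed.

Lemma vnorm_eq0 m (v : vec m) : vnorm v = 0 -> v = (fun _ => 0).
Proof.
move=> v0; apply: functional_extensionality => j.
have := Rabs_coord_le_vnorm v j; rewrite v0 => vj; have := Rabs_pos (v j).
by case: (Req_dec (v j) 0) => // /Rabs_pos_lt; lra.
Qed.

Lemma rsum_sqr_le n (f : 'I_n -> R) :
  rsum (fun j => f j * f j) <= rsum (fun j => Rabs (f j)) * rsum (fun j => Rabs (f j)).
Proof.
elim: n f => [|n IH] f; first by rewrite /rsum !big_ord0; lra.
rewrite !rsum_recr.
have := IH (fun i => f (widen_ord (leqnSn n) i)).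
set A := rsum (fun i => _ * _); set S := rsum (fun i => Rabs _).
have S0 : 0 <= S by apply: rsum_ge0 => i; apply: Rabs_pos.
have := Rabs_pos (f ord_max).
have : f ord_max * f ord_max = Rabs (f ord_max) * Rabs (f ord_max).
  by rewrite -Rabs_mult Rabs_right //; nra.
nra.
Qed.

Lemma vnorm_le_l1 m (v : vec m) : vnorm v <= rsum (fun j => Rabs (v j)).
Proof.
have l1_0 : 0 <= rsum (fun j => Rabs (v j)) by apply: rsum_ge0 => j; apply: Rabs_pos.
rewrite /vnorm -(sqrt_square (rsum _)) //; apply: sqrt_le_1_alt; exact: rsum_sqr_le.
Qed.

Lemma vnorm_le_coord m (v : vec m) c : (forall j, Rabs (v j) <= c) -> vnorm v <= INR m * c.
Proof. by move=> vc; apply: Rle_trans (vnorm_le_l1 v) _; rewrite -rsum_const; apply: rsum_le. Qed.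

Lemma vnormZ m c (v : vec m) : vnorm (vscal c v) = Rabs c * vnorm v.
Proof.
rewrite /vnorm /dot /vscal (eq_rsum (g := fun j => (c * c) * (v j * v j))); last by move=> j; ring.
rewrite rsum_mull sqrt_mult; [|nra|exact: dot_ge0].
by have := sqrt_Rsqr_abs c; rewrite /Rsqr => ->.
Qed.

Lemma vnorm_vsubC m (u v : vec m) : vnorm (vsub u v) = vnorm (vsub v u).
Proof.
have -> : vsub u v = vscal (-1) (vsub v u).
  by apply: functional_extensionality => j; rewrite /vsub /vscal; ring.
by rewrite vnormZ Rabs_Ropp Rabs_R1; ring.
Qed.

(* The factor [m] (instead of Cauchy-Schwarz) is harmless for boundedness. *)
Lemma Rabs_dot_le m (u w : vec m) : Rabs (dot u w) <= INR m * (vnorm u * vnorm w).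
Proof.
apply: Rle_trans (Rabs_rsum_le _) _; rewrite -rsum_const; apply: rsum_le => j.
rewrite Rabs_mult; apply: Rmult_le_compat; try apply: Rabs_pos; exact: Rabs_coord_le_vnorm.
Qed.

Lemma dot_comb m (g u w : vec m) s t :
  dot g (fun j => s * u j + t * w j) = s * dot g u + t * dot g w.
Proof. by rewrite /dot -!rsum_mull -rsumD; apply: eq_rsum => j; ring. Qed.

Lemma dot_vsubxx m (g x : vec m) : dot g (vsub x x) = 0.
Proof. by rewrite -(rsum0 m); apply: eq_rsum => j; rewrite /vsub; ring. Qed.

Lemma dot_vsubl m (u v w : vec m) : dot (vsub u v) w = dot u w - dot v w.
Proof. by rewrite /dot -rsumB; apply: eq_rsum => j; rewrite /vsub; ring. Qed.

Lemma convex_set_rsum m (X : vec m -> Prop) n (w : 'I_n -> R) (p : 'I_n -> vec m) :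
  is_convex_set X -> (forall j, 0 <= w j) -> rsum w = 1 -> (forall j, X (p j)) ->
  X (fun c => rsum (fun j => w j * p j c)).
Proof.
move=> convX; elim: n w p => [|n IH] w p w0 w1 Xp.
  by move: w1; rewrite /rsum big_ord0; lra.
rewrite rsum_recr in w1.
set s := rsum (fun j : 'I_n => w (widen_ord (leqnSn n) j)) in w1.
have s0 : 0 <= s by apply: rsum_ge0.
case: (Req_dec s 0) => [sz|snz].
  have wz := rsum_eq0_ge0 (fun j => w0 (widen_ord (leqnSn n) j)) sz.
  have -> : (fun c => rsum (fun j => w j * p j c)) = p ord_max; last exact: Xp.
  apply: functional_extensionality => c; rewrite rsum_recr.
  rewrite (eq_rsum (g := fun _ => 0)) ?rsum0; last by move=> j; rewrite wz; ring.
  by rewrite (_ : w ord_max = 1); [ring | lra].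
set q : vec m := fun c => rsum (fun j : 'I_n =>
  w (widen_ord (leqnSn n) j) / s * p (widen_ord (leqnSn n) j) c).
have Xq : X q.
  apply: IH => [j||j]; last exact: Xp.
  - by apply: Rle_mult_inv_pos => //; lra.
  - rewrite (eq_rsum (g := fun j => / s * w (widen_ord (leqnSn n) j))); last first.
      by move=> j; rewrite /Rdiv; ring.
    by rewrite rsum_mull -/s; field.
have -> : (fun c => rsum (fun j => w j * p j c)) = vcomb (w ord_max) q (p ord_max).
  apply: functional_extensionality => c; rewrite rsum_recr /vcomb /vadd /vscal /q.
  rewrite (_ : 1 - w ord_max = s); last lra.
  by rewrite -rsum_mull; congr (_ + _); apply: eq_rsum => j; field.
by apply: convX => //; have := w0 ord_max; lra.
Qed.

(** * Subgradients of convex functions on open sets *)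

Lemma exists_between (Lo Up : R -> Prop) :
  (exists l, Lo l) -> (exists u, Up u) -> (forall l u, Lo l -> Up u -> l <= u) ->
  exists c, (forall l, Lo l -> l <= c) /\ (forall u, Up u -> c <= u).
Proof.
move=> [l0 Lol0] [u0 Upu0] LoUp.
have [c [cub club]] :=
  completeness Lo (ex_intro _ u0 (fun l Lol => LoUp l u0 Lol Upu0)) (ex_intro _ l0 Lol0).
exists c; split => [l|u Upu]; first exact: cub.
by apply: club => l Lol; apply: LoUp.
Qed.

(* A subgradient at [x] is built one coordinate at a time: after [k] steps [xi]
   supports [G] at [x] along the cube directions spanned by the first [k]
   coordinates, and the next coordinate is fixed between the left and right
   slopes of [G] along it, which are ordered by convexity. *)
Section Subgradient.
Variables (m : nat) (O : vec m -> Prop) (G : vec m -> R) (x : vec m) (rho : R).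
Hypothesis convG : convex_fun_on O G.
Hypothesis rho_gt0 : 0 < rho.
Hypothesis cubeO : forall v : vec m, (forall c, Rabs (v c) <= rho) -> O (vadd x v).

Definition cube_supp k (v : vec m) :=
  (forall c, Rabs (v c) <= rho) /\ (forall c : 'I_m, (k <= c)%N -> v c = 0).

Definition partial_subgrad k (xi : vec m) :=
  (forall c : 'I_m, (k <= c)%N -> xi c = 0) /\
  forall v, cube_supp k v -> G x + dot xi v <= G (vadd x v).

Lemma cube_supp0 k : cube_supp k (fun _ => 0).
Proof. by split => [c|//]; rewrite Rabs_R0; lra. Qed.

Lemma partial_subgrad0 : partial_subgrad 0 (fun _ => 0).
Proof.
split => // v [_ v0].
have -> : vadd x v = x by apply: functional_extensionality => c; rewrite /vadd v0 //; ring.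
by rewrite /dot (eq_rsum (g := fun _ => 0)) ?rsum0; [lra | move=> j; ring].
Qed.

Section Step.
Variables (k : nat) (ltkm : (k < m)%N) (xi : vec m).
Hypothesis xi_sub : partial_subgrad k xi.

Let ek := Ordinal ltkm.
Let e : vec m := fun c => if c == ek then 1 else 0.
Let A (v : vec m) t := G (vadd x (fun c => v c + t * e c)) - G x - dot xi v.

Lemma cube_supp_shift v t c : cube_supp k v -> Rabs t <= rho -> Rabs (v c + t * e c) <= rho.
Proof.
move=> [v_rho v0] t_rho; rewrite /e; case: (c =P ek) => [->|_].
  by rewrite v0 /= ?leqnn // Rplus_0_l Rmult_1_r.
by rewrite Rmult_0_r Rplus_0_r.
Qed.

Lemma slopes_ordered v w s t : cube_supp k v -> cube_supp k w ->
  0 < s <= rho -> 0 < t <= rho -> - A w (- s) / s <= A v t / t.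
Proof.
move=> v_cube w_cube s_rho t_rho.
set lam := s / (s + t).
have lam01 : 0 < lam < 1.
  rewrite /lam; split; first by apply: Rdiv_lt_0_compat; lra.
  by apply: (Rmult_lt_reg_r (s + t)); [lra | rewrite /Rdiv Rmult_assoc Rinv_l; lra].
set u : vec m := fun c => (1 - lam) * w c + lam * v c.
have u_cube : cube_supp k u.
  case: v_cube w_cube => [v_rho v0] [w_rho w0]; split => c.
    rewrite /u; apply: Rabs_le; have := Rabs_le_inv (v_rho c); have := Rabs_le_inv (w_rho c); nra.
  by move=> kc; rewrite /u v0 // w0 //; ring.
have s_abs : Rabs (- s) <= rho by rewrite Rabs_Ropp Rabs_right; lra.
have t_abs : Rabs t <= rho by rewrite Rabs_right; lra.
have Ow := cubeO (fun c => cube_supp_shift c w_cube s_abs).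
have Ov := cubeO (fun c => cube_supp_shift c v_cube t_abs).
have mid : vcomb lam (vadd x (fun c => w c + - s * e c)) (vadd x (fun c => v c + t * e c))
    = vadd x u.
  apply: functional_extensionality => c; rewrite /vcomb /vadd /vscal /u.
  have -> : (1 - lam) * (x c + (w c + - s * e c)) + lam * (x c + (v c + t * e c)) =
    x c + ((1 - lam) * w c + lam * v c) + e c * ((1 - lam) * - s + lam * t) by ring.
  by rewrite (_ : (1 - lam) * - s + lam * t = 0); [ring | rewrite /lam; field; lra].
have conv := convG Ow Ov (conj (Rlt_le _ _ (proj1 lam01)) (Rlt_le _ _ (proj2 lam01))).
rewrite mid in conv; have {conv} conv := conv (cubeO (proj1 u_cube)).
have sub_u := (proj2 xi_sub) u u_cube.
have dot_u : dot xi u = (1 - lam) * dot xi w + lam * dot xi v by rewrite /u dot_comb.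
have key : 0 <= t * A w (- s) + s * A v t.
  apply: (Rmult_le_reg_r (/ (s + t))); first by apply: Rinv_0_lt_compat; lra.
  rewrite Rmult_0_l (_ : (t * A w (- s) + s * A v t) * / (s + t) =
    (1 - lam) * A w (- s) + lam * A v t); last by rewrite /lam; field; lra.
  by rewrite /A; lra.
rewrite /Rdiv; apply: (Rmult_le_reg_l (s * t)); first nra.
have -> : s * t * (- A w (- s) * / s) = - (t * A w (- s)) by field; lra.
have -> : s * t * (A v t * / t) = s * A v t by field; lra.
lra.
Qed.

Lemma cube_supp_succ w : cube_supp k.+1 w ->
  exists v, cube_supp k v /\ w = (fun c' => v c' + w ek * e c').
Proof.
move=> [w_rho w0]; exists (fun c' => if c' == ek then 0 else w c'); split.
  split => c'; case: (c' =P ek) => [_|ne]; rewrite ?Rabs_R0 //; try lra.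
  move=> kc; apply: w0; rewrite ltn_neqAle kc andbT.
  by apply/eqP => E; apply: ne; apply: val_inj => /=; rewrite -E.
by apply: functional_extensionality => c'; rewrite /e; case: (c' =P ek) => [->|_]; ring.
Qed.

Lemma dot_unit_shift v c t : v ek = 0 ->
  dot (fun c' => xi c' + c * e c') (fun c' => v c' + t * e c') = dot xi v + c * t.
Proof.
move=> v0; have xi0 : xi ek = 0 by apply: (proj1 xi_sub); rewrite /= leqnn.
rewrite /dot (eq_rsum (g := fun j =>
  xi j * v j + (if j == ek then 1 else 0) * (t * xi j + c * v j + c * t))).
  by rewrite rsumD rsum_delta xi0 v0; ring.
by move=> j; rewrite /e; case: (j == ek); ring.
Qed.

Lemma partial_subgrad_ext c :
  (forall w s, cube_supp k w -> 0 < s <= rho -> - A w (- s) / s <= c) ->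
  (forall v t, cube_supp k v -> 0 < t <= rho -> c <= A v t / t) ->
  partial_subgrad k.+1 (fun c' => xi c' + c * e c').
Proof.
move=> cLo cUp; have [xi0 xi_sup] := xi_sub; split.
  move=> c' kc'; rewrite xi0 ?(ltnW kc') // /e.
  case: (c' =P ek) => [E|_]; last by ring.
  by move: kc'; rewrite E /= ltnn.
move=> w w_cube; have [v [v_cube ->]] := cube_supp_succ w_cube.
have t_rho := Rabs_le_inv ((proj1 w_cube) ek); set t := w ek in t_rho *.
rewrite dot_unit_shift; last by apply: (proj2 v_cube); rewrite /= leqnn.
case: (Rtotal_order t 0) => [tneg|[t0|tpos]].
- have := cLo v (- t) v_cube (conj (ltac:(lra) : 0 < - t) (ltac:(lra) : - t <= rho)).
  rewrite Ropp_involutive => le; have : - A v t <= c * - t.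
    by rewrite (_ : - A v t = - A v t / - t * - t); [apply: Rmult_le_compat_r; lra | field; lra].
  rewrite /A; lra.
- have := xi_sup v v_cube.
  have -> : vadd x (fun c0 => v c0 + t * e c0) = vadd x v.
    by apply: functional_extensionality => c0; rewrite /vadd t0; ring.
  rewrite t0; lra.
- have := cUp v t v_cube (conj tpos (proj2 t_rho)) => le; have : c * t <= A v t.
    by rewrite (_ : A v t = A v t / t * t); [apply: Rmult_le_compat_r; lra | field; lra].
  rewrite /A; lra.
Qed.

Lemma partial_subgrad_step : exists xi', partial_subgrad k.+1 xi'.
Proof.
pose Lo l := exists w s, cube_supp k w /\ 0 < s <= rho /\ l = - A w (- s) / s.
pose Up u := exists v t, cube_supp k v /\ 0 < t <= rho /\ u = A v t / t.
have rho_rho : 0 < rho <= rho by split; [|apply: Rle_refl].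
have [c [cLo cUp]] : exists c, (forall l, Lo l -> l <= c) /\ (forall u, Up u -> c <= u).
  apply: exists_between.
  - by exists (- A (fun _ => 0) (- rho) / rho), (fun _ => 0), rho; split; [exact: cube_supp0|].
  - by exists (A (fun _ => 0) rho / rho), (fun _ => 0), rho; split; [exact: cube_supp0|].
  - by move=> _ _ [w [s [w_cube [s_rho ->]]]] [v [t [v_cube [t_rho ->]]]]; exact: slopes_ordered.
exists (fun c' => xi c' + c * e c'); apply: partial_subgrad_ext => [w s w_cube s_rho|v t v_cube t_rho].
  by apply: cLo; exists w, s.
by apply: cUp; exists v, t.
Qed.
End Step.

Lemma exists_partial_subgrad k : (k <= m)%N -> exists xi, partial_subgrad k xi.
Proof.
elim: k => [|k IH] km; first by exists (fun _ => 0); exact: partial_subgrad0.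
by have [xi xi_sub] := IH (ltnW km); exact: partial_subgrad_step xi_sub.
Qed.

Lemma exists_subgradient_cube : exists xi, subgradient O G x xi.
Proof.
have [xi [_ xi_sup]] := exists_partial_subgrad (leqnn m).
exists xi => y Oy.
set N := rsum (fun c => Rabs (y c - x c)) + 1.
have N_gt0 : 0 < N.
  have : 0 <= rsum (fun c => Rabs (y c - x c)) by apply: rsum_ge0 => c; apply: Rabs_pos.
  rewrite /N; lra.
set s := Rmin 1 (rho / N).
have s_gt0 : 0 < s by apply: Rmin_pos; [lra | apply: Rdiv_lt_0_compat].
have s_le1 : s <= 1 := Rmin_l _ _.
set u : vec m := fun c => s * (y c - x c).
have u_cube : cube_supp m u.
  split => c; last by move=> mc; have := ltn_ord c; rewrite ltnNge mc.
  rewrite /u Rabs_mult Rabs_right; last lra.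
  have yc : Rabs (y c - x c) <= N.
    rewrite /N; have := rsum_ge_term (f := fun c => Rabs (y c - x c)) c (fun j => Rabs_pos _); lra.
  apply: Rle_trans (Rmult_le_compat_l _ _ _ (Rlt_le _ _ s_gt0) yc) _.
  apply: Rle_trans (Rmult_le_compat_r _ _ _ (Rlt_le _ _ N_gt0) (Rmin_r _ _)) _.
  by right; field; lra.
have Ox : O x.
  have := cubeO (v := fun _ => 0) (fun c => ltac:(rewrite Rabs_R0; lra)).
  by rewrite (_ : vadd x _ = x) //; apply: functional_extensionality => c; rewrite /vadd; ring.
have := convG Ox Oy (conj (Rlt_le _ _ s_gt0) s_le1).
rewrite (_ : vcomb s x y = vadd x u); last first.
  by apply: functional_extensionality => c; rewrite /vcomb /vadd /vscal /u; ring.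
move=> /(_ (cubeO (proj1 u_cube))) conv.
have := xi_sup u u_cube.
rewrite (_ : dot xi u = s * dot xi (vsub y x)); last first.
  by rewrite /dot -rsum_mull; apply: eq_rsum => c; rewrite /u /vsub; ring.
move=> sub; apply: Rle_ge; apply: (Rmult_le_reg_l s) => //; nra.
Qed.
End Subgradient.

Lemma exists_subgradient m (O : vec m -> Prop) (G : vec m -> R) x :
  is_open O -> convex_fun_on O G -> O x -> exists xi, subgradient O G x xi.
Proof.
move=> openO convG Ox; have [r [r_gt0 ballO]] := openO x Ox.
have m1 : 0 < INR m + 1 by have := pos_INR m; lra.
apply: (@exists_subgradient_cube m O G x (r / (INR m + 1))) => //.
  exact: Rdiv_lt_0_compat.
move=> v v_small; apply: ballO.
rewrite (_ : vsub (vadd x v) x = v); last first.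
  by apply: functional_extensionality => c; rewrite /vsub /vadd; ring.
apply: Rle_lt_trans (vnorm_le_coord v_small) _.
rewrite (_ : INR m * (r / (INR m + 1)) = r - r / (INR m + 1)); last by field; lra.
have : 0 < r / (INR m + 1) by apply: Rdiv_lt_0_compat.
lra.
Qed.

(** * Strong convexity *)

Lemma le_of_le_add_eps a b c : 0 <= c -> (forall eps, 0 < eps -> a <= b + eps * c) -> a <= b.
Proof.
move=> c0 le_eps; apply: Rnot_lt_le => ba.
have eps_gt0 : 0 < (a - b) / (2 * (c + 1)) by apply: Rdiv_lt_0_compat; lra.
have := le_eps _ eps_gt0.
have : (a - b) / (2 * (c + 1)) * c < a - b.
  rewrite (_ : (a - b) / (2 * (c + 1)) * c = (a - b) * (c / (2 * (c + 1)))); last by field; lra.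
  have : c / (2 * (c + 1)) < 1.
    rewrite (_ : c / (2 * (c + 1)) = 1 - (c + 2) / (2 * (c + 1))); last by field; lra.
    have : 0 < (c + 2) / (2 * (c + 1)) by apply: Rdiv_lt_0_compat; lra.
    lra.
  have : 0 <= c / (2 * (c + 1)) by apply: Rle_mult_inv_pos; lra.
  nra.
lra.
Qed.

Lemma gradient_segment_lb m (X O : vec m -> Prop) (h : vec m -> R) (g : vec m -> vec m) x z eps :
  is_convex_set X -> (forall w, X w -> O w) -> X x -> X z -> has_gradient_on O h g -> 0 < eps ->
  exists t0, 0 < t0 <= 1 /\ forall t, 0 < t <= t0 ->
    t * dot (g x) (vsub z x) - eps * t * vnorm (vsub z x) <= h (vcomb t x z) - h x.
Proof.
move=> convX XO Xx Xz grad eps_gt0.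
set D := vnorm (vsub z x); have D0 : 0 <= D by apply: vnorm_ge0.
have [delta [delta_gt0 diff]] := grad x (XO _ Xx) eps eps_gt0.
exists (Rmin 1 (delta / (D + 1))); split.
  by split; [apply: Rmin_pos; [lra | apply: Rdiv_lt_0_compat; lra] | exact: Rmin_l].
move=> t [t_gt0 t_le].
have t1 : t <= 1 := Rle_trans _ _ _ t_le (Rmin_l _ _).
have t_delta : t * (D + 1) <= delta.
  rewrite (_ : delta = delta / (D + 1) * (D + 1)); last by field; lra.
  by apply: Rmult_le_compat_r; [lra | exact: Rle_trans t_le (Rmin_r _ _)].
have seg : vsub (vcomb t x z) x = vscal t (vsub z x).
  by apply: functional_extensionality => j; rewrite /vsub /vcomb /vadd /vscal; ring.
have seg_norm : vnorm (vsub (vcomb t x z) x) = t * D by rewrite seg vnormZ Rabs_right //; lra.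
have close : vnorm (vsub (vcomb t x z) x) < delta by rewrite seg_norm; lra.
have := Rabs_le_inv (diff _ (XO _ (convX _ _ _ Xx Xz (conj (Rlt_le _ _ t_gt0) t1))) close).
rewrite seg_norm seg (_ : dot (g x) (vscal t (vsub z x)) = t * dot (g x) (vsub z x)); first lra.
by rewrite /dot -rsum_mull; apply: eq_rsum => j; rewrite /vscal; ring.
Qed.

(* Bound [h (x + t (z - x))] from below to first order (error [eps t D]) and from
   above by strong convexity, divide by [t] and let [t <= eps] tend to [0]. *)
Lemma strongly_convex_gradient_ineq m (X O : vec m -> Prop) (h : vec m -> R) (g : vec m -> vec m)
    tau x z :
  is_convex_set X -> (forall w, X w -> O w) -> X x -> X z ->
  strongly_convex_on X h tau -> has_gradient_on O h g ->
  dot (g x) (vsub z x) + tau / 2 * vnorm (vsub z x) ^ 2 <= h z - h x.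
Proof.
move=> convX XO Xx Xz [tau_gt0 sconv] grad.
set D := vnorm (vsub z x); set q := dot (g x) (vsub z x).
have D2 : 0 <= D ^ 2 by apply: pow2_ge_0.
apply: (le_of_le_add_eps (c := D + tau / 2 * D ^ 2)).
  have : 0 <= D by apply: vnorm_ge0.
  nra.
move=> eps eps_gt0.
have [t0 [t01 lb]] := gradient_segment_lb convX XO Xx Xz grad eps_gt0.
set t := Rmin t0 eps.
have t_gt0 : 0 < t by apply: Rmin_pos; lra.
have t_eps : t <= eps := Rmin_r _ _.
have t1 : t <= 1 by apply: Rle_trans (Rmin_l _ _) (proj2 t01).
have := lb t (conj t_gt0 (Rmin_l _ _)); rewrite -/q -/D => first_order.
have := sconv x z t Xx Xz (conj (Rlt_le _ _ t_gt0) t1); rewrite vnorm_vsubC -/D => conv.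
apply: (Rmult_le_reg_l t) => //.
have : tau / 2 * t * t * D ^ 2 <= tau / 2 * t * eps * D ^ 2.
  apply: Rmult_le_compat_r => //.
  by apply: Rmult_le_compat_l => //; apply: Rmult_le_pos; lra.
nra.
Qed.

(* The linear term replaces the gradient of [h] at [x0] by [p], as in the SONATA
   subproblem. *)
Lemma argmin_dist_le m (X O : vec m -> Prop) (h : vec m -> R) (g : vec m -> vec m)
    (G : vec m -> R) tau (x0 z p xi : vec m) :
  is_convex_set X -> (forall w, X w -> O w) -> X x0 -> X z ->
  strongly_convex_on X h tau -> has_gradient_on O h g ->
  h z + dot (vsub p (g x0)) (vsub z x0) + G z <= h x0 + dot (vsub p (g x0)) (vsub x0 x0) + G x0 ->
  subgradient O G x0 xi ->
  vnorm (vsub z x0) <= 2 * INR m * (vnorm p + vnorm xi) / tau.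
Proof.
move=> convX XO Xx0 Xz sconv grad better sub.
have tau_gt0 := proj1 sconv.
have first_order := strongly_convex_gradient_ineq convX XO Xx0 Xz sconv grad.
have G_sub := Rge_le _ _ (sub z (XO _ Xz)).
rewrite dot_vsubxx dot_vsubl in better.
set d := vnorm (vsub z x0) in first_order *.
have d0 : 0 <= d by apply: vnorm_ge0.
have := Rabs_le_inv (Rabs_dot_le p (vsub z x0)); rewrite -/d => [[p_dot _]].
have := Rabs_le_inv (Rabs_dot_le xi (vsub z x0)); rewrite -/d => [[xi_dot _]].
have m0 := pos_INR m; have p0 := vnorm_ge0 p; have xi0 := vnorm_ge0 xi.
have quad : tau / 2 * d ^ 2 <= INR m * (vnorm p + vnorm xi) * d by simpl in *; nra.
case: (Req_dec d 0) => [->|dnz].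
  by apply: Rle_mult_inv_pos => //; nra.
apply: Rle_div_r => //.
apply: (Rmult_le_reg_l (d / 2)); first lra.
by simpl in quad; nra.
Qed.

(** * Products of weight matrices *)

(* [mxprod W k s] is the product [W (k+s-1) * ... * W k], the identity for [s = 0]. *)
Fixpoint mxprod n (W : nat -> 'I_n -> 'I_n -> R) (k s : nat) : 'I_n -> 'I_n -> R :=
  match s with
  | 0 => fun i j => if i == j then 1 else 0
  | s'.+1 => fun i j => rsum (fun l => W (k + s')%N i l * mxprod W k s' l j)
  end.

Lemma mxprod_ge0 n (W : nat -> 'I_n -> 'I_n -> R) k s i j :
  (forall k i j, 0 <= W k i j) -> 0 <= mxprod W k s i j.
Proof.
move=> W0; elim: s i j => [|s IH] i j /=; first by case: (i == j); lra.
by apply: rsum_ge0 => l; apply: Rmult_le_pos.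
Qed.

Lemma mxprod_iter n (W : nat -> 'I_n -> 'I_n -> R) (z : nat -> 'I_n -> R) :
  (forall k i, z k.+1 i = rsum (fun j => W k i j * z k j)) ->
  forall k s i, z (k + s)%N i = rsum (fun j => mxprod W k s i j * z k j).
Proof.
move=> z_rec k s; elim: s => [|s IH] i.
  by rewrite addn0 /= -(rsum_delta (z k) i); apply: eq_rsum => j; rewrite eq_sym.
rewrite addnS z_rec /=.
rewrite (eq_rsum (g := fun l => rsum (fun j => W (k + s)%N i l * mxprod W k s l j * z k j))).
  by rewrite exchange_rsum; apply: eq_rsum => j; rewrite rsum_mulr.
by move=> l; rewrite IH -rsum_mull; apply: eq_rsum => j; ring.
Qed.

Section RowStochastic.
Variables (n : nat) (W : nat -> 'I_n -> 'I_n -> R).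
Hypothesis W_ge0 : forall k i j, 0 <= W k i j.
Hypothesis W_row : forall k i, rsum (W k i) = 1.

Lemma mxprod_row k s i : rsum (mxprod W k s i) = 1.
Proof.
elim: s i => [|s IH] i /=.
  by rewrite -[RHS](rsum_delta (fun _ => 1) i); apply: eq_rsum => j /=; rewrite eq_sym; ring.
rewrite exchange_rsum -(W_row (k + s) i); apply: eq_rsum => l.
by rewrite rsum_mull IH; ring.
Qed.

Lemma mxprod_iter_perturbed (z d : nat -> 'I_n -> R) (D : nat -> R) :
  (forall k i, z k.+1 i = rsum (fun j => W k i j * z k j) + d k i) ->
  (forall k i, Rabs (d k i) <= D k) ->
  forall k s i, Rabs (z (k + s)%N i - rsum (fun j => mxprod W k s i j * z k j))
                <= psum (fun t => D (k + t)%N) s.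
Proof.
move=> z_rec dD k s; elim: s => [|s IH] i /=.
  rewrite addn0 (eq_rsum (g := fun j => (if j == i then 1 else 0) * z k j)) ?rsum_delta.
    by rewrite Rminus_diag_eq // Rabs_R0; lra.
  by move=> j; rewrite eq_sym.
rewrite addnS z_rec.
have -> : rsum (fun j => rsum (fun l => W (k + s)%N i l * mxprod W k s l j) * z k j) =
          rsum (fun l => W (k + s)%N i l * rsum (fun j => mxprod W k s l j * z k j)).
  rewrite (eq_rsum (g := fun j => rsum (fun l => W (k + s)%N i l * mxprod W k s l j * z k j))).
    by rewrite exchange_rsum; apply: eq_rsum => l; rewrite -rsum_mull; apply: eq_rsum => j; ring.
  by move=> j; rewrite rsum_mulr.
set r := fun l => z (k + s)%N l - rsum (fun j => mxprod W k s l j * z k j).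
have -> : rsum (fun j => W (k + s)%N i j * z (k + s)%N j) + d (k + s)%N i -
     rsum (fun l => W (k + s)%N i l * rsum (fun j => mxprod W k s l j * z k j)) =
     rsum (fun l => W (k + s)%N i l * r l) + d (k + s)%N i.
  rewrite (eq_rsum (f := fun l => W (k + s)%N i l * r l) (g := fun l =>
      W (k + s)%N i l * z (k + s)%N l - W (k + s)%N i l * rsum (fun j => mxprod W k s l j * z k j))).
    by rewrite rsumB; ring.
  by move=> l; rewrite /r; ring.
apply: Rle_trans (Rabs_triang _ _) _.
by apply: Rplus_le_compat; [apply: Rabs_wavg_le | apply: dD].
Qed.

Variables (m : nat) (z d : nat -> 'I_n -> vec m) (D : nat -> R).
Hypothesis z_rec : forall k i c, z k.+1 i c = rsum (fun j => W k i j * z k j c) + d k i c.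
Hypothesis dD : forall k i c, Rabs (d k i c) <= D k.
Hypothesis D_ge0 : forall k, 0 <= D k.

Lemma vspread_step k : vspread (z k.+1) <= vspread (z k) + 2 * D k.
Proof.
have rhs0 : 0 <= vspread (z k) + 2 * D k by have := vspread_ge0 (z k); have := D_ge0 k; lra.
apply: bmax_lub => // c; apply: spread_lub => // i i'.
have step : forall i1, Rabs (z k.+1 i1 c - rsum (fun j => W k i1 j * z k j c)) <= D k.
  by move=> i1; rewrite z_rec (_ : forall a b, a + b - a = b) //; move=> a b; ring.
have := spread_avg_step (W_ge0 k) (W_row k) (W_ge0 k) step i i'.
have := spread_le_vspread (z k) c.
lra.
Qed.

Lemma vspread_window T dl : dl <= 1 -> (forall k i j, dl <= mxprod W k T i j) ->
  forall k, vspread (z (k + T)%N) <= (1 - dl) * vspread (z k) + 2 * psum (fun t => D (k + t)%N) T.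
Proof.
move=> dl1 mx_dl k.
have psum0 : 0 <= psum (fun t => D (k + t)%N) T by apply: psum_ge0.
have rhs0 : 0 <= (1 - dl) * vspread (z k) + 2 * psum (fun t => D (k + t)%N) T.
  by have := vspread_ge0 (z k); nra.
apply: bmax_lub => // c; apply: spread_lub => // i i'.
have iter := mxprod_iter_perturbed (fun k i => z_rec k i c) (fun k i => dD k i c) k T.
have := spread_avg_step (fun i j => mxprod_ge0 k T i j W_ge0) (mxprod_row k T) (mx_dl k) iter i i'.
have := spread_le_vspread (z k) c.
move=> h1 h2; have : (1 - dl) * spread (fun j => z k j c) <= (1 - dl) * vspread (z k).
  by apply: Rmult_le_compat_l => //; lra.
lra.
Qed.
End RowStochastic.

(** * Connectivity and push-sum weights *)

Lemma clos_trans_crossing T (Rl : T -> T -> Prop) (P : T -> Prop) u v :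
  clos_trans _ Rl u v -> P u -> ~ P v -> exists p q, Rl p q /\ P p /\ ~ P q.
Proof.
elim => [x y xy|x y z _ IH1 _ IH2] Px Pz; first by exists x, y.
by case: (classic (P y)) => Py; [exact: IH2 | exact: IH1].
Qed.

Lemma Rle_pow_le1 x m n : 0 <= x <= 1 -> (m <= n)%N -> x ^ n <= x ^ m.
Proof.
move=> x01 mn; rewrite -(subnKC mn) pow_add.
suff : x ^ (n - m) <= 1 by have := pow_le x m (proj1 x01); nra.
by elim: (n - m)%N => [|d IH] /=; [lra | nra].
Qed.

Section Connectivity.
Variables (n B : nat) (kappa : R) (E : nat -> 'I_n -> 'I_n -> Prop) (a : nat -> 'I_n -> 'I_n -> R).
Hypothesis a_adm : admissible_weights E a kappa.
Hypothesis E_conn : B_strongly_connected E B.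
Hypothesis kappa_gt0 : 0 < kappa.

Lemma a_ge0 k i j : 0 <= a k i j.
Proof. exact: (proj1 (a_adm k)). Qed.

Lemma kappa_le1 : 'I_n -> kappa <= 1.
Proof.
move=> i0; case: (a_adm 0%N) => _ [_ [_ [a_diag a_col]]].
have := a_col i0; have := a_diag i0.
by have := rsum_ge_term (f := fun i => a 0%N i i0) i0 (fun i => a_ge0 0%N i i0); lra.
Qed.

Definition reach k s (j i : 'I_n) := kappa ^ s <= mxprod a k s i j.

Lemma reach_refl k j : reach k 0 j j.
Proof. by rewrite /reach /= eqxx; lra. Qed.

Lemma reach_step k s j l i : reach k s j l -> (l = i \/ E (k + s) l i) -> reach k s.+1 j i.
Proof.
rewrite /reach => jl li /=.
have a_li : kappa <= a (k + s) i l.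
  case: li => [<-|li]; first exact: (proj1 (proj2 (proj2 (proj2 (a_adm _))))).
  exact: (proj1 (proj2 (proj2 (a_adm _)))) li.
apply: Rle_trans (rsum_ge_term (f := fun l => a (k + s) i l * mxprod a k s l j) l _).
  by apply: Rmult_le_compat => //; [lra | apply: pow_le; lra].
by move=> l'; apply: Rmult_le_pos; [exact: a_ge0 | exact: mxprod_ge0 a_ge0].
Qed.

Lemma reach_mono k s s' j i : (s <= s')%N -> reach k s j i -> reach k s' j i.
Proof.
move=> ss'; rewrite -(subnKC ss'); elim: (s' - s)%N => [|d IH]; first by rewrite addn0.
by move=> ji; rewrite addnS; apply: (reach_step (l := i)); [exact: IH | left].
Qed.

(* A path of the window's union graph from the reached set to an unreached node
   crosses the boundary along an edge. *)
Lemma reach_window k s j : (exists i, ~ reach k s j i) ->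
  exists i, ~ reach k s j i /\ reach k (s + B) j i.
Proof.
move=> [v not_jv].
have jj : reach k s j j by apply: (reach_mono (leq0n s)); exact: reach_refl.
have jv : j <> v by move=> E'; apply: not_jv; rewrite -E'.
have [p [q [[t [kst [tsB pq]]] [jp not_jq]]]] := clos_trans_crossing (E_conn (k + s)%N jv) jj not_jv.
exists q; split => //.
have jp' : reach k (t - k) j p by apply: reach_mono jp; lia.
have jq : reach k (t - k).+1 j q.
  by apply: (reach_step jp'); right; rewrite (_ : (k + (t - k))%N = t) //; lia.
by apply: reach_mono jq; lia.
Qed.
Definition reachb k s j i : bool := if Rle_dec (kappa ^ s) (mxprod a k s i j) then true else false.

Lemma reachbP k s j i : reflect (reach k s j i) (reachb k s j i).
Proof. by rewrite /reachb /reach; case: Rle_dec => ?; constructor. Qed.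

Lemma card_reach k j r : (minn r.+1 n <= #|[set i | reachb k (r * B) j i]|)%N.
Proof.
elim: r => [|r IH].
  apply: leq_trans (geq_minl _ _) _; rewrite card_gt0; apply/set0Pn; exists j.
  by rewrite inE mul0n; apply/reachbP; exact: reach_refl.
set S := [set i | reachb k (r * B) j i] in IH *.
set S' := [set i | reachb k (r.+1 * B) j i].
have SS' : S \subset S'.
  by apply/subsetP => i; rewrite !inE => /reachbP ji; apply/reachbP; apply: reach_mono ji; lia.
case: (classic (exists i, ~ reach k (r * B) j i)) => [unreached|all_reached].
  have [i [ji_no ji]] := reach_window unreached.
  have SS'_proper : S \proper S'.
    apply/properP; split => //; exists i; rewrite !inE.
      by apply/reachbP; rewrite mulSnr.
    by apply/reachbP.
  by have := proper_card SS'_proper; move: IH; rewrite /minn; case: ifP; case: ifP; lia.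
have ST : S = setT.
  by apply/setP => i; rewrite !inE; apply/reachbP; apply: NNPP => ji; apply: all_reached; exists i.
have -> : S' = setT by apply/eqP; rewrite eqEcard subsetT -ST; apply: subset_leq_card.
by rewrite cardsT card_ord; exact: geq_minr.
Qed.

Lemma mxprod_ge_pow k i j : (0 < n)%N ->
  kappa ^ ((n - 1) * B) <= mxprod a k ((n - 1) * B) i j.
Proof.
move=> n0; apply: NNPP => ji.
have := card_reach k j (n - 1).
have : [set i0 | reachb k ((n - 1) * B) j i0] \subset [set~ i].
  by apply/subsetP => i0; rewrite !inE => /reachbP r; apply/eqP => E'; apply: ji; rewrite -E'.
move/subset_leq_card; rewrite cardsC1 card_ord.
by rewrite (_ : (n - 1).+1 = n) ?minnn; lia.
Qed.

Section PushSum.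
Variable phi : nat -> 'I_n -> R.
Hypothesis phi0 : forall i, phi 0%N i = 1.
Hypothesis phi_rec : forall k i, phi k.+1 i = rsum (fun j => a k i j * phi k j).

Lemma phi_ge0 k i : 0 <= phi k i.
Proof.
elim: k i => [|k IH] i; first by rewrite phi0; lra.
by rewrite phi_rec; apply: rsum_ge0 => j; apply: Rmult_le_pos => //; exact: a_ge0.
Qed.

Lemma phi_sum k : rsum (phi k) = INR n.
Proof.
elim: k => [|k IH]; first by rewrite (eq_rsum (g := fun _ => 1)) // rsum_const; ring.
rewrite (eq_rsum (f := phi k.+1) (phi_rec k)) exchange_rsum -IH; apply: eq_rsum => j.
by rewrite rsum_mulr (proj2 (proj2 (proj2 (proj2 (a_adm k))))); ring.
Qed.

Lemma phi_ge_pow k i : kappa ^ k <= phi k i.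
Proof.
elim: k i => [|k IH] i; first by rewrite phi0 /=; lra.
rewrite phi_rec /=.
apply: Rle_trans (rsum_ge_term (f := fun j => a k i j * phi k j) i _).
  apply: Rmult_le_compat; [lra | apply: pow_le; lra | | exact: IH].
  exact: (proj1 (proj2 (proj2 (proj2 (a_adm k))))).
by move=> j; apply: Rmult_le_pos; [exact: a_ge0 | exact: phi_ge0].
Qed.

(* Before time [T] the crude bound [kappa ^ k] suffices; afterwards [phi] is an
   average of earlier weights (of total mass [n]) through a product bounded by
   [kappa ^ T]. *)
Lemma phi_ge_window k i : (0 < n)%N -> kappa ^ ((n - 1) * B) <= phi k i.
Proof.
move=> n0; set T := ((n - 1) * B)%N.
have kappa1 := kappa_le1 i.
have kT0 : 0 <= kappa ^ T by apply: pow_le; lra.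
case: (leqP k T) => [kT|Tk].
  by apply: Rle_trans (phi_ge_pow k i); apply: Rle_pow_le1 => //; lra.
rewrite (_ : k = (k - T) + T)%N; last by lia.
rewrite (mxprod_iter phi_rec).
apply: Rle_trans (_ : rsum (fun j => kappa ^ T * phi (k - T)%N j) <= _).
  rewrite rsum_mull phi_sum.
  have : 1 <= INR n by apply: (le_INR 1); apply/leP.
  nra.
apply: rsum_le => j; apply: Rmult_le_compat_r; first exact: phi_ge0.
exact: mxprod_ge_pow.
Qed.
End PushSum.
End Connectivity.

(** * A discrete small-gain argument *)

Lemma exists_prefix_bound (f : nat -> R) N : exists M, forall k, (k < N)%N -> f k <= M.
Proof.
elim: N => [|N [M HM]]; first by exists 0.
exists (Rmax M (f N)) => k; rewrite ltnS leq_eqVlt => /orP [/eqP ->|lt]; first exact: Rmax_r.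
exact: Rle_trans (HM k lt) (Rmax_l _ _).
Qed.

Lemma sqr_summable_small (g : nat -> R) : (forall k, 0 < g k) ->
  (exists l, Un_cv (fun n => sum_f_R0 (fun k => g k ^ 2) n) l) ->
  forall eps, 0 < eps -> exists N, forall k, (N <= k)%N -> g k <= eps.
Proof.
move=> g0 [l gl] eps eps0.
have [N HN] := gl _ (ltac:(nra) : 0 < eps * eps / 2).
exists N.+1 => [[|p]] // Np.
have h1 := HN p ltac:(apply/leP; lia); have h2 := HN p.+1 ltac:(apply/leP; lia).
rewrite /R_dist /= in h1 h2.
have : g p.+1 ^ 2 < eps * eps.
  by have := Rabs_def2 _ _ h1; have := Rabs_def2 _ _ h2; lra.
by have := g0 p.+1; rewrite /=; nra.
Qed.

Lemma eventually_contracting_bounded (V : nat -> R) r c N T : (0 < T)%N -> 0 < r <= 1 ->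
  (forall k, 0 <= V k) -> (forall k, (N <= k)%N -> V (k + T)%N <= (1 - r) * V k + c) ->
  exists M, forall k, V k <= M.
Proof.
move=> T0 r0 V0 Vstep.
have [M0 HM0] := exists_prefix_bound V (N + T).
exists (Rmax M0 (c / r)).
have fixp : (1 - r) * Rmax M0 (c / r) + c <= Rmax M0 (c / r).
  have : c <= Rmax M0 (c / r) * r.
    rewrite {1}(_ : c = c / r * r); last by field; lra.
    by apply: Rmult_le_compat_r; [lra | exact: Rmax_r].
  lra.
elim/ltn_ind => k IH.
case: (ltnP k (N + T)) => [lt|ge]; first exact: Rle_trans (HM0 k lt) (Rmax_l _ _).
rewrite (_ : k = (k - T) + T)%N; last by lia.
apply: Rle_trans (Vstep (k - T)%N ltac:(lia)) _; apply: Rle_trans fixp.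
by apply: Rplus_le_compat_r; apply: Rmult_le_compat_l; [lra | apply: IH; lia].
Qed.

(* Two nonnegative quantities [SX], [SY] which contract by [1 - dl] over windows of
   length [T], up to perturbations driven by [g * D] with [D] of linear growth in
   [SX + SY], stay bounded once the step sizes [g] tend to [0]: the Lyapunov function
   [SX + eps * SY] absorbs the coupling of [SY] to [SX] for small [eps]. *)
Section WindowRecursion.
Variables (SX SY g D : nat -> R) (A K dl : R) (T : nat).
Hypotheses (T_gt0 : (0 < T)%N) (dl01 : 0 < dl <= 1) (A_ge0 : 0 <= A) (K_ge0 : 0 <= K).
Hypotheses (SX_ge0 : forall k, 0 <= SX k) (SY_ge0 : forall k, 0 <= SY k) (D_ge0 : forall k, 0 <= D k).
Hypothesis g01 : forall k, 0 < g k <= 1.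
Hypothesis g_small : forall eps, 0 < eps -> exists N, forall k, (N <= k)%N -> g k <= eps.
Hypothesis D_le : forall k, D k <= K * (SX k + SY k + 1).
Hypothesis SX_step : forall k, SX k.+1 <= SX k + 2 * (g k * D k).
Hypothesis SY_step : forall k, SY k.+1 <= SY k + 2 * (A * (SX k + g k * D k)).
Hypothesis SX_window : forall k,
  SX (k + T)%N <= (1 - dl) * SX k + 2 * psum (fun t => g (k + t)%N * D (k + t)%N) T.
Hypothesis SY_window : forall k, SY (k + T)%N <= (1 - dl) * SY k +
  2 * psum (fun t => A * (SX (k + t)%N + g (k + t)%N * D (k + t)%N)) T.

Let Z k := SX k + SY k + 1.
Let C := 1 + 2 * K + 2 * A * (1 + K).
Let CT := C ^ T.
Let Gam k := psum (fun t => g (k + t)%N) T.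
Let alpha := 2 * A * INR T.
Let beta := 2 * K * CT + 2 * A * (2 * INR T + 1) * K * CT.

Lemma Z_ge1 k : 1 <= Z k.
Proof. by rewrite /Z; have := SX_ge0 k; have := SY_ge0 k; lra. Qed.

Lemma Z_step k : Z k.+1 <= C * Z k.
Proof.
rewrite /Z /C.
have := SX_step k; have := SY_step k; have := D_le k; have := g01 k.
have := SX_ge0 k; have := SY_ge0 k; have := D_ge0 k => h1 h2 h3 h4 h5 h6 h7.
have gD : g k * D k <= K * (SX k + SY k + 1) by nra.
have : A * (g k * D k) <= A * (K * (SX k + SY k + 1)) by apply: Rmult_le_compat_l.
have : A * SX k <= A * (SX k + SY k + 1) by apply: Rmult_le_compat_l; lra.
nra.
Qed.

Lemma C_ge1 : 1 <= C.
Proof. rewrite /C; have : 0 <= A * (1 + K) by nra. lra. Qed.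

Lemma CT_ge1 : 1 <= CT.
Proof. by rewrite /CT; have := Rle_pow C 0 T C_ge1 (le_0_n T); rewrite /=; lra. Qed.

Lemma Z_within_window k t : (t <= T)%N -> Z (k + t)%N <= CT * Z k.
Proof.
move=> tT; apply: Rle_trans (_ : C ^ t * Z k <= _); last first.
  apply: Rmult_le_compat_r; first by have := Z_ge1 k; lra.
  by apply: Rle_pow; [exact: C_ge1 | exact/leP].
elim: t tT => [|t IH] tT; first by rewrite addn0 /=; lra.
rewrite addnS /=; apply: Rle_trans (Z_step _) _.
by have := IH (ltnW tT); have := C_ge1; nra.
Qed.

Lemma Gam_ge0 k : 0 <= Gam k.
Proof. by apply: psum_ge0 => t; have := g01 (k + t)%N; lra. Qed.

Lemma psum_gD_le k : psum (fun t => g (k + t)%N * D (k + t)%N) T <= K * CT * Z k * Gam k.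
Proof.
rewrite /Gam -psum_mull; apply: psum_le => t tT.
have := Z_within_window k (ltnW tT); have := D_le (k + t)%N; have := g01 (k + t)%N.
rewrite -/(Z (k + t)%N) => h1 h2 h3.
have : D (k + t)%N <= K * (CT * Z k) by apply: Rle_trans h2 _; apply: Rmult_le_compat_l.
by have := D_ge0 (k + t)%N; nra.
Qed.

Lemma SX_within_window k t : (t <= T)%N -> SX (k + t)%N <= SX k + 2 * (K * CT * Z k * Gam k).
Proof.
move=> tT.
apply: Rle_trans (_ : SX (k + t)%N <= SX k + 2 * psum (fun t => g (k + t)%N * D (k + t)%N) t) _.
  elim: t tT => [|t IH] tT; first by rewrite addn0 /=; lra.
  by rewrite addnS /=; have := SX_step (k + t)%N; have := IH (ltnW tT); lra.
have := psum_gD_le k.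
have := psum_le_prefix (f := fun t => g (k + t)%N * D (k + t)%N)
  (fun t => Rmult_le_pos _ _ (Rlt_le _ _ (proj1 (g01 _))) (D_ge0 _)) tT.
lra.
Qed.

Lemma SX_window_Gam k : SX (k + T)%N <= (1 - dl) * SX k + beta * Gam k * Z k.
Proof.
have := SX_window k; have := psum_gD_le k; have := Gam_ge0 k; have := Z_ge1 k; have := CT_ge1.
rewrite /beta => h1 h2 h3 h4 h5.
have : 0 <= 2 * A * (2 * INR T + 1) * K * CT * Gam k * Z k.
  by move: (pos_INR T) => T0; repeat apply: Rmult_le_pos; lra.
nra.
Qed.

Lemma SY_window_Gam k : SY (k + T)%N <= (1 - dl) * SY k + alpha * SX k + beta * Gam k * Z k.
Proof.
have psum_le' : psum (fun t => A * (SX (k + t)%N + g (k + t)%N * D (k + t)%N)) T <=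
    A * (INR T * (SX k + 2 * (K * CT * Z k * Gam k)) + K * CT * Z k * Gam k).
  rewrite psum_mull psumD; apply: Rmult_le_compat_l => //.
  apply: Rplus_le_compat; last exact: psum_gD_le.
  by rewrite -psum_const; apply: psum_le => t tT; exact: SX_within_window (ltnW tT).
have := SY_window k; have := Gam_ge0 k; have := Z_ge1 k; have := CT_ge1; have := pos_INR T.
rewrite /alpha /beta => h1 h2 h3 h4 h5.
have : 0 <= 2 * K * CT * Gam k * Z k by repeat apply: Rmult_le_pos; lra.
have : 2 * (A * (INR T * (SX k + 2 * (K * CT * Z k * Gam k)) + K * CT * Z k * Gam k)) =
  2 * A * INR T * SX k + 2 * A * (2 * INR T + 1) * K * CT * Gam k * Z k by ring.
nra.
Qed.

Lemma alpha_ge0 : 0 <= alpha.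
Proof. by rewrite /alpha; have := pos_INR T; nra. Qed.

Lemma beta_ge0 : 0 <= beta.
Proof.
rewrite /beta; have := CT_ge1; have := pos_INR T => h1 h2.
have : 0 <= 2 * K * CT by nra.
have : 0 <= 2 * A * (2 * INR T + 1) * K * CT by repeat apply: Rmult_le_pos; lra.
lra.
Qed.

Lemma lyapunov_window_step eps eta k : 0 < eps <= 1 -> eps * alpha <= dl / 2 ->
  8 * (beta * eta) <= dl * eps -> Gam k <= eta ->
  SX (k + T)%N + eps * SY (k + T)%N <= (1 - dl / 4) * (SX k + eps * SY k) + 2 * beta * eta.
Proof.
move=> eps01 eps_alpha eta_small Gam_eta.
have h1 := SX_window_Gam k; have h2 := SY_window_Gam k; have h5 := Gam_ge0 k.
have h6 := SX_ge0 k; have h7 := SY_ge0 k; have h8 := Z_ge1 k; have bt0 := beta_ge0.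
have eta0 : 0 <= eta by lra.
have Z_le : Z k <= (SX k + eps * SY k) / eps + 1.
  rewrite /Z (_ : (SX k + eps * SY k) / eps = SX k / eps + SY k); last by field; lra.
  have : SX k <= SX k / eps by apply: Rle_div_r; nra.
  lra.
have e1 : eps * SY (k + T)%N <= eps * ((1 - dl) * SY k + alpha * SX k + beta * Gam k * Z k).
  by apply: Rmult_le_compat_l; lra.
have e2 : beta * Gam k * Z k <= beta * eta * ((SX k + eps * SY k) / eps + 1).
  rewrite Rmult_assoc (Rmult_assoc beta eta); apply: Rmult_le_compat_l => //.
  by apply: Rmult_le_compat => //; lra.
have e3 : (1 + eps) * (beta * eta * ((SX k + eps * SY k) / eps + 1)) <=
    dl / 4 * (SX k + eps * SY k) + 2 * beta * eta.
  rewrite (_ : (1 + eps) * (beta * eta * ((SX k + eps * SY k) / eps + 1)) =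
    beta * eta / eps * (1 + eps) * (SX k + eps * SY k) + (1 + eps) * beta * eta); last by field; lra.
  have : beta * eta / eps * (1 + eps) <= dl / 4.
    have : beta * eta / eps <= dl / 8 by apply: Rle_div_l; lra.
    have : 0 <= beta * eta / eps by apply: Rle_mult_inv_pos; nra.
    nra.
  have : 0 <= SX k + eps * SY k by nra.
  have : 0 <= beta * eta by nra.
  nra.
have : 0 <= beta * Gam k * Z k by repeat apply: Rmult_le_pos; lra.
have : eps * alpha * SX k <= dl / 2 * SX k by apply: Rmult_le_compat_r.
have : (1 + eps) * (beta * Gam k * Z k) <= (1 + eps) * (beta * eta * ((SX k + eps * SY k) / eps + 1)).
  by apply: Rmult_le_compat_l => //; lra.
have : 0 <= dl * (eps * SY k) by apply: Rmult_le_pos; [lra | nra].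
lra.
Qed.

Lemma window_recursion_bounded : exists M, forall k, SX k <= M /\ SY k <= M.
Proof.
have al0 := alpha_ge0; have bt0 := beta_ge0.
set eps := dl / (2 * alpha + 2).
have eps_gt0 : 0 < eps by apply: Rdiv_lt_0_compat; lra.
have eps_le1 : eps <= 1 by apply: Rle_div_l; lra.
have eps_alpha : eps * alpha <= dl / 2.
  rewrite /eps (_ : dl / (2 * alpha + 2) * alpha = dl * (alpha / (2 * alpha + 2))); last by field; lra.
  have : alpha / (2 * alpha + 2) <= 1 / 2 by apply: Rle_div_l; lra.
  nra.
set eta := dl * eps / (8 * beta + 1).
have eta_gt0 : 0 < eta by apply: Rdiv_lt_0_compat; nra.
have eta_small : 8 * (beta * eta) <= dl * eps.
  rewrite /eta (_ : 8 * (beta * (dl * eps / (8 * beta + 1))) = dl * eps * (8 * beta / (8 * beta + 1))); last by field; lra.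
  have : 8 * beta / (8 * beta + 1) <= 1 by apply: Rle_div_l; lra.
  have : 0 <= dl * eps by nra.
  nra.
have [N gN] := g_small (Rdiv_lt_0_compat _ _ eta_gt0 (lt_0_INR T ltac:(lia))).
have Gam_eta : forall k, (N <= k)%N -> Gam k <= eta.
  move=> k Nk; rewrite /Gam.
  apply: Rle_trans (_ : psum (fun _ => eta / INR T) T <= _).
    by apply: psum_le => t _; apply: gN; lia.
  by rewrite psum_const; right; field; apply: not_0_INR; lia.
have [M VM] := eventually_contracting_bounded (V := fun k => SX k + eps * SY k)
  (r := dl / 4) (c := 2 * beta * eta) T_gt0 ltac:(lra)
  (fun k => ltac:(have := SX_ge0 k; have := SY_ge0 k; nra))
  (fun k Nk => lyapunov_window_step (conj eps_gt0 eps_le1) eps_alpha eta_small (Gam_eta k Nk)).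
exists (M / eps) => k; have := VM k; have := SX_ge0 k; have := SY_ge0 k => h1 h2 h3.
split; apply: Rle_div_r => //; nra.
Qed.
End WindowRecursion.

Section Sonata.
Variables (m nI B : nat) (kappa : R)
  (X O : vec m -> Prop)
  (gf : 'I_nI -> vec m -> vec m) (L : 'I_nI -> R)
  (G : vec m -> R)
  (E : nat -> 'I_nI -> 'I_nI -> Prop) (a : nat -> 'I_nI -> 'I_nI -> R)
  (ft : 'I_nI -> vec m -> vec m -> R) (gft : 'I_nI -> vec m -> vec m -> vec m)
  (tau : 'I_nI -> R) (gamma : nat -> R) (LF LG : R)
  (x xh xt y : nat -> 'I_nI -> vec m) (phi : nat -> 'I_nI -> R).
Hypotheses (HI : (2 <= nI)%N) (HB : (0 < B)%N)
  (HXcv : is_convex_set X) (HOop : is_open O) (HXO : forall z, X z -> O z)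
  (Hgf : forall i, lipschitz_on X (gf i) (L i))
  (HG : convex_fun_on O G)
  (Hkappa : 0 < kappa) (HE : B_strongly_connected E B) (Ha : admissible_weights E a kappa)
  (Hft1 : forall i w, X w -> strongly_convex_on X (fun z => ft i z w) (tau i))
  (Hft2 : forall i w, X w -> has_gradient_on O (fun z => ft i z w) (fun z => gft i z w))
  (Hft3 : forall i w, X w -> gft i w w = gf i w)
  (HA1 : forall z, X z -> vnorm (vsum (fun i => gf i z)) <= LF)
  (HA2 : forall z xi, X z -> subgradient O G z xi -> vnorm xi <= LG)
  (HA3a : forall k, 0 < gamma k <= 1)
  (HA3c : exists l, Un_cv (fun n => sum_f_R0 (fun k => (gamma k) ^ 2) n) l)
  (Hx0 : forall i, X (x 0%nat i))
  (Hphi0 : forall i, phi 0%nat i = 1)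
  (Hy0 : forall i, y 0%nat i = gf i (x 0%nat i))
  (Hxt : forall k i, X (xt k i) /\
     forall z, X z -> sonata_obj ft gf G i (x k i) (y k i) (xt k i)
                      <= sonata_obj ft gf G i (x k i) (y k i) z)
  (Hxh : forall k i, xh k i = vadd (x k i) (vscal (gamma k) (vsub (xt k i) (x k i))))
  (Hphi : forall k i, phi (S k) i = rsum (fun j => a k i j * phi k j))
  (Hx : forall k i, x (S k) i =
     vscal (/ phi (S k) i) (vsum (fun j => vscal (a k i j * phi k j) (xh k j))))
  (Hy : forall k i, y (S k) i =
     vadd (vscal (/ phi (S k) i) (vsum (fun j => vscal (a k i j * phi k j) (y k j))))
          (vscal (/ phi (S k) i) (vsub (gf i (x (S k) i)) (gf i (x k i))))).

Let T := ((nI - 1) * B)%N.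
Let nI_gt0 : (0 < nI)%N := ltnW HI.
Let i0 : 'I_nI := Ordinal nI_gt0.
Let plb := kappa ^ T.

Lemma nI_ge1 : 1 <= INR nI.
Proof. by apply: (le_INR 1); apply/leP. Qed.

Lemma plb_gt0 : 0 < plb.
Proof. exact: pow_lt. Qed.

Lemma plb_le1 : plb <= 1.
Proof. by apply: (Rle_pow_le1 (m := 0)) => //; have := kappa_le1 Ha i0; lra. Qed.

Lemma phi_lb k i : plb <= phi k i.
Proof. exact: phi_ge_window. Qed.

Lemma phi_gt0 k i : 0 < phi k i.
Proof. by have := phi_lb k i; have := plb_gt0; lra. Qed.

Lemma phi_ub k i : phi k i <= INR nI.
Proof.
by rewrite -(phi_sum Ha Hphi0 Hphi k); apply: rsum_ge_term => j; have := phi_gt0 k j; lra.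
Qed.

(* Besides [i] there is at least one other agent, carrying weight at least [plb]. *)
Lemma push_sum_weight_bounds : 0 < kappa ^ (2 * (nI - 1) * B) /\
  forall k i, kappa ^ (2 * (nI - 1) * B) <= phi k i <= INR nI - kappa ^ (2 * (nI - 1) * B).
Proof.
rewrite (_ : (2 * (nI - 1) * B)%N = (T + T)%N); last by rewrite /T; lia.
rewrite pow_add -/plb.
have := plb_gt0; have := plb_le1 => plb1 plb0.
split; first exact: Rmult_lt_0_compat.
move=> k i; split; first by apply: Rle_trans (phi_lb k i); nra.
set j1 : 'I_nI := if i == i0 then Ordinal HI else i0.
have j1i : j1 != i.
  rewrite /j1; case: (i =P i0) => [->|ne]; last by apply/eqP => E'; apply: ne; rewrite E'.
  by apply/eqP => /(f_equal val).
have := rsumD1 (phi k) i; rewrite (phi_sum Ha Hphi0 Hphi) => sum_i.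
have : phi k j1 <= rsum (fun j => if j != i then phi k j else 0).
  have := rsum_ge_term (f := fun j => if j != i then phi k j else 0) j1.
  by rewrite j1i; apply => j; case: (j != i); [exact: Rlt_le (phi_gt0 _ _) | lra].
by have := phi_lb k j1; nra.
Qed.

Let W k i j := a k i j * phi k j / phi k.+1 i.

Lemma W_ge0 k i j : 0 <= W k i j.
Proof.
rewrite /W; apply: Rle_mult_inv_pos; last exact: phi_gt0.
by apply: Rmult_le_pos; [exact: (a_ge0 Ha k i j) | exact: Rlt_le (phi_gt0 _ _)].
Qed.

Lemma W_row k i : rsum (W k i) = 1.
Proof.
rewrite /W (eq_rsum (g := fun j => / phi k.+1 i * (a k i j * phi k j))); last first.
  by move=> j; rewrite /Rdiv; ring.
by rewrite rsum_mull -Hphi; field; have := phi_gt0 k.+1 i; lra.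
Qed.

Lemma mxprod_W k s i j : mxprod W k s i j = mxprod a k s i j * phi k j / phi (k + s)%N i.
Proof.
elim: s i j => [|s IH] i j /=.
  rewrite addn0; case: (i =P j) => [->|_]; last by rewrite /Rdiv; ring.
  by field; have := phi_gt0 k j; lra.
rewrite addnS (eq_rsum (g := fun l => phi k j / phi (k + s).+1 i * (a (k + s)%N i l * mxprod a k s l j))).
  by rewrite rsum_mull /Rdiv; ring.
move=> l; rewrite IH /W.
by field; split; [have := phi_gt0 (k + s).+1 i | have := phi_gt0 (k + s)%N l]; lra.
Qed.

Let dl := plb * plb / INR nI.

Lemma dl01 : 0 < dl <= 1.
Proof.
have := plb_gt0; have := plb_le1; have := nI_ge1 => h1 h2 h3.
by split; [apply: Rdiv_lt_0_compat; nra | apply: Rle_div_l; nra].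
Qed.

Lemma mxprod_W_ge k i j : dl <= mxprod W k T i j.
Proof.
rewrite mxprod_W /dl.
have a_lb : plb <= mxprod a k T i j by exact: mxprod_ge_pow.
have := phi_lb k j; have := phi_ub (k + T)%N i; have := phi_gt0 (k + T)%N i.
have := plb_gt0; have := nI_ge1 => h1 h2 h3 h4 h5.
apply: Rle_trans (_ : plb * plb / phi (k + T)%N i <= _).
  apply: Rmult_le_compat_l; first nra.
  exact: Rinv_le_contravar.
apply: Rmult_le_compat_r; first by left; apply: Rinv_0_lt_compat.
by apply: Rmult_le_compat => //; lra.
Qed.

Lemma x_next k i : x k.+1 i = (fun c => rsum (fun j => W k i j * xh k j c)).
Proof.
apply: functional_extensionality => c; rewrite Hx /vscal /vsum -rsum_mull.
by apply: eq_rsum => j; rewrite /W /Rdiv; ring.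
Qed.

Lemma x_in_X k i : X (x k i).
Proof.
elim: k i => [|k IH] i; first exact: Hx0.
rewrite x_next; apply: convex_set_rsum => //; [exact: W_ge0 | exact: W_row | move=> j].
rewrite (_ : xh k j = vcomb (gamma k) (x k j) (xt k j)); last first.
  by rewrite Hxh; apply: functional_extensionality => c; rewrite /vcomb /vadd /vscal /vsub; ring.
by apply: HXcv; [exact: IH | exact: (proj1 (Hxt k j)) | have := HA3a k; lra].
Qed.

Let dx k i c := rsum (fun j => W k i j * (gamma k * (xt k j c - x k j c))).
Let dy k i c := (gf i (x k.+1 i) c - gf i (x k i) c) / phi k.+1 i.

Lemma x_consensus k i c : x k.+1 i c = rsum (fun j => W k i j * x k j c) + dx k i c.
Proof. by rewrite x_next -rsumD; apply: eq_rsum => j; rewrite Hxh /vadd /vscal /vsub; ring. Qed.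

Lemma y_consensus k i c : y k.+1 i c = rsum (fun j => W k i j * y k j c) + dy k i c.
Proof.
rewrite Hy /vadd /vscal /vsum /vsub -rsum_mull; congr (_ + _); last by rewrite /dy /Rdiv; ring.
by apply: eq_rsum => j; rewrite /W /Rdiv; ring.
Qed.

Lemma tracking_invariant k c : rsum (fun l => phi k l * y k l c) = rsum (fun l => gf l (x k l) c).
Proof.
elim: k => [|k IH]; first by apply: eq_rsum => l; rewrite Hphi0 Hy0; ring.
rewrite (eq_rsum (g := fun l => rsum (fun j => a k l j * phi k j * y k j c) +
      (gf l (x k.+1 l) c - gf l (x k l) c))); last first.
  move=> l; rewrite y_consensus /W /dy Rmult_plus_distr_l; have := phi_gt0 k.+1 l => phi0.
  by congr (_ + _); [rewrite -rsum_mull; apply: eq_rsum => j |]; field; lra.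
rewrite rsumD exchange_rsum rsumB -IH.
rewrite (eq_rsum (f := fun j => rsum (fun i => a k i j * phi k j * y k j c))
  (g := fun j => phi k j * y k j c)); first ring.
move=> j; rewrite (eq_rsum (g := fun i => a k i j * (phi k j * y k j c))); last by move=> i; ring.
by rewrite rsum_mulr (proj2 (proj2 (proj2 (proj2 (Ha k))))); ring.
Qed.

Let SX k := vspread (x k).
Let SY k := vspread (y k).
Let Dx k := bmax (fun j => vnorm (vsub (xt k j) (x k j))).
Let Lsum := rsum (fun i => Rabs (L i)).

Lemma Lsum_ge i : Rabs (L i) <= Lsum.
Proof. by apply: (rsum_ge_term (f := fun i => Rabs (L i))) => j; exact: Rabs_pos. Qed.

Lemma Lsum_ge0 : 0 <= Lsum.
Proof. exact: Rle_trans (Rabs_pos _) (Lsum_ge i0). Qed.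

Lemma LF_ge0 : 0 <= LF.
Proof. by have := HA1 (Hx0 i0); have := vnorm_ge0 (vsum (fun i => gf i (x 0%N i0))); lra. Qed.

Lemma LG_ge0 : 0 <= LG.
Proof.
have [xi xi_sub] := exists_subgradient HOop HG (HXO (Hx0 i0)).
by have := HA2 (Hx0 i0) xi_sub; have := vnorm_ge0 xi; lra.
Qed.

Lemma tau_gt0 j : 0 < tau j.
Proof. exact: (proj1 (Hft1 j (Hx0 i0))). Qed.

Lemma x_perturbation_le k i c : Rabs (dx k i c) <= gamma k * Dx k.
Proof.
apply: Rabs_wavg_le; [exact: W_ge0 | exact: W_row | move=> j].
have := HA3a k => g01; rewrite Rabs_mult Rabs_right; last lra.
apply: Rmult_le_compat_l; first lra.
apply: Rle_trans (Rabs_coord_le_vnorm (vsub (xt k j) (x k j)) c) _.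
exact: (le_bmax (fun j => vnorm (vsub (xt k j) (x k j)))).
Qed.

Lemma x_step_le k i c : Rabs (x k.+1 i c - x k i c) <= SX k + gamma k * Dx k.
Proof.
rewrite x_consensus.
have := Rabs_wavg_sub_le_spread (fun j => x k j c) i (W_ge0 k i) (W_row k i).
have := x_perturbation_le k i c.
have : spread (fun j => x k j c) <= SX k := spread_le_vspread (x k) c.
move=> h1 h2 h3; apply: Rabs_le; have := Rabs_le_inv h2; have := Rabs_le_inv h3; lra.
Qed.


Lemma grad_coord_diff_le i u v c : X u -> X v ->
  Rabs (gf i u c - gf i v c) <= Rabs (L i) * vnorm (vsub u v).
Proof.
move=> Xu Xv; apply: Rle_trans (Rabs_coord_le_vnorm (vsub (gf i u) (gf i v)) c) _.
apply: Rle_trans (Hgf i Xu Xv) _; apply: Rmult_le_compat_r; first exact: vnorm_ge0.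
exact: Rle_abs.
Qed.

Lemma y_perturbation_le k i c : Rabs (dy k i c) <= Lsum * INR m / plb * (SX k + gamma k * Dx k).
Proof.
have phi_pos := phi_gt0 k.+1 i.
rewrite /Rdiv Rabs_mult Rabs_Rinv; last lra.
rewrite (Rabs_right (phi _ _)); last lra.
have grad : Rabs (gf i (x k.+1 i) c - gf i (x k i) c) <= Lsum * (INR m * (SX k + gamma k * Dx k)).
  apply: Rle_trans (grad_coord_diff_le i c (x_in_X k.+1 i) (x_in_X k i)) _.
  apply: Rmult_le_compat; [exact: Rabs_pos | exact: vnorm_ge0 | exact: Lsum_ge |].
  by apply: vnorm_le_coord => c'; exact: x_step_le.
apply: Rle_trans (_ : Lsum * (INR m * (SX k + gamma k * Dx k)) * / plb <= _).
  apply: Rmult_le_compat => //; try apply: Rabs_pos.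
    by left; apply: Rinv_0_lt_compat.
  by apply: Rinv_le_contravar; [exact: plb_gt0 | exact: phi_lb].
by right; field; have := plb_gt0; lra.
Qed.

Lemma SX_ge0 k : 0 <= SX k.
Proof. exact: vspread_ge0. Qed.

Lemma SY_ge0 k : 0 <= SY k.
Proof. exact: vspread_ge0. Qed.

Lemma Dx_ge0 k : 0 <= Dx k.
Proof. exact: bmax_ge0. Qed.

Lemma vnorm_x_sub_le k l l' : vnorm (vsub (x k l) (x k l')) <= INR m * SX k.
Proof.
apply: vnorm_le_coord => c; apply: Rabs_le; rewrite /vsub.
by have := vspread_ge (x k) c l l'; have := vspread_ge (x k) c l' l; rewrite -/(SX k); lra.
Qed.

Lemma rsum_grad_le k c : Rabs (rsum (fun l => gf l (x k l) c)) <= LF + Lsum * (INR m * SX k).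
Proof.
rewrite (_ : rsum (fun l => gf l (x k l) c) =
  rsum (fun l => gf l (x k i0) c) + rsum (fun l => gf l (x k l) c - gf l (x k i0) c)); last first.
  by rewrite -rsumD; apply: eq_rsum => l; ring.
apply: Rle_trans (Rabs_triang _ _) _; apply: Rplus_le_compat.
  exact: Rle_trans (Rabs_coord_le_vnorm (vsum (fun l => gf l (x k i0))) c) (HA1 (x_in_X k i0)).
apply: Rle_trans (Rabs_rsum_le _) _.
rewrite /Lsum -rsum_mulr; apply: rsum_le => l.
apply: Rle_trans (grad_coord_diff_le l c (x_in_X k l) (x_in_X k i0)) _.
exact: Rmult_le_compat_l _ _ _ (Rabs_pos _) (vnorm_x_sub_le k l i0).
Qed.

Let q k l := phi k l / INR nI.

Lemma q_ge0 k l : 0 <= q k l.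
Proof. by apply: Rle_mult_inv_pos; [exact: Rlt_le (phi_gt0 _ _) | have := nI_ge1; lra]. Qed.

Lemma q_sum k : rsum (q k) = 1.
Proof.
rewrite /q (eq_rsum (g := fun l => / INR nI * phi k l)); last by move=> l; rewrite /Rdiv; ring.
by rewrite rsum_mull (phi_sum Ha Hphi0 Hphi); field; have := nI_ge1; lra.
Qed.

Lemma y_dev_le k i c : Rabs (rsum (fun l => q k l * y k l c) - y k i c) <= SY k.
Proof.
apply: Rle_trans (Rabs_wavg_sub_le_spread (fun l => y k l c) i (q_ge0 k) (q_sum k)) _.
exact: spread_le_vspread.
Qed.

Lemma vnorm_y_le k j : vnorm (y k j) <= INR m * (SY k + (LF + Lsum * (INR m * SX k))).
Proof.
apply: vnorm_le_coord => c.
have avg : rsum (fun l => q k l * y k l c) = / INR nI * rsum (fun l => gf l (x k l) c).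
  by rewrite -tracking_invariant -rsum_mull; apply: eq_rsum => l; rewrite /q /Rdiv; ring.
have avg_le : Rabs (rsum (fun l => q k l * y k l c)) <= LF + Lsum * (INR m * SX k).
  have n1 := nI_ge1.
  rewrite avg Rabs_mult Rabs_Rinv; last lra.
  rewrite (Rabs_right (INR nI)); last lra.
  have : / INR nI <= 1 by rewrite -Rinv_1; apply: Rinv_le_contravar; lra.
  have : 0 < / INR nI by apply: Rinv_0_lt_compat; lra.
  by have := rsum_grad_le k c; have := Rabs_pos (rsum (fun l => gf l (x k l) c)); nra.
apply: Rabs_le; have := Rabs_le_inv (y_dev_le k j c); have := Rabs_le_inv avg_le; lra.
Qed.

Let K := bmax (fun j => 2 * INR m * (INR nI * INR m * (1 + LF + Lsum * INR m) + LG) / tau j).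

(* Optimality of [xt] against the feasible point [x] (with a subgradient of [G] at
   [x]) and the bound on [y] obtained from the tracking invariant. *)
Lemma Dx_le k : Dx k <= K * (SX k + SY k + 1).
Proof.
have Z1 : 1 <= SX k + SY k + 1 by have := SX_ge0 k; have := SY_ge0 k; lra.
apply: bmax_lub => [|j]; first by apply: Rmult_le_pos; [exact: bmax_ge0 | lra].
have Xj := x_in_X k j.
have [xi xi_sub] := exists_subgradient HOop HG (HXO Xj).
have better := (proj2 (Hxt k j)) _ Xj; rewrite /sonata_obj -(Hft3 j Xj) in better.
have := argmin_dist_le HXcv HXO Xj (proj1 (Hxt k j)) (Hft1 j Xj) (Hft2 j Xj) better xi_sub.
rewrite vnormZ Rabs_right; last by apply: Rle_ge; apply: pos_INR.
have := vnorm_y_le k j; have := HA2 Xj xi_sub; have := tau_gt0 j.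
have := pos_INR m; have := nI_ge1; have := LF_ge0; have := Lsum_ge0; have := LG_ge0.
have := SX_ge0 k; have := SY_ge0 k; have := vnorm_ge0 xi.
set cK := 2 * INR m * (INR nI * INR m * (1 + LF + Lsum * INR m) + LG).
move=> xi0 SY0 SX0 LG0 Ls0 LF0 n1 m0 tau0 xiLG ynorm dist.
apply: Rle_trans dist _.
apply: Rle_trans (_ : cK / tau j * (SX k + SY k + 1) <= _); last first.
  by apply: Rmult_le_compat_r; [lra | exact: (le_bmax (fun j => cK / tau j))].
rewrite (_ : cK / tau j * (SX k + SY k + 1) = cK * (SX k + SY k + 1) / tau j); last by field; lra.
apply: Rmult_le_compat_r; first by left; apply: Rinv_0_lt_compat.
rewrite /cK (Rmult_assoc (2 * INR m)); apply: Rmult_le_compat_l; first lra.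
have LsSX : 0 <= Lsum * INR m by nra.
have y_lin : SY k + (LF + Lsum * (INR m * SX k)) <= (1 + LF + Lsum * INR m) * (SX k + SY k + 1).
  by nra.
have : INR nI * vnorm (y k j) <= INR nI * INR m * ((1 + LF + Lsum * INR m) * (SX k + SY k + 1)).
  rewrite Rmult_assoc; apply: Rmult_le_compat_l; first lra.
  by apply: Rle_trans ynorm _; apply: Rmult_le_compat_l.
have : LG <= LG * (SX k + SY k + 1) by nra.
nra.
Qed.

Lemma vspread_bounded : exists M, forall k, SX k <= M /\ SY k <= M.
Proof.
have gD0 k : 0 <= gamma k * Dx k by have := HA3a k; have := Dx_ge0 k; nra.
have Ay0 : 0 <= Lsum * INR m / plb.
  by apply: Rle_mult_inv_pos; [have := Lsum_ge0; have := pos_INR m; nra | exact: plb_gt0].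
have yD0 k : 0 <= Lsum * INR m / plb * (SX k + gamma k * Dx k).
  by have := SX_ge0 k; have := gD0 k; nra.
have dl1 := proj2 dl01.
apply: (@window_recursion_bounded SX SY gamma Dx (Lsum * INR m / plb) K dl T) => //.
- by rewrite /T muln_gt0 HB andbT; lia.
- exact: dl01.
- exact: bmax_ge0.
- exact: SX_ge0.
- exact: SY_ge0.
- exact: Dx_ge0.
- exact: (sqr_summable_small (fun k => proj1 (HA3a k)) HA3c).
- exact: Dx_le.
- exact: (vspread_step W_ge0 W_row x_consensus x_perturbation_le gD0).
- exact: (vspread_step W_ge0 W_row y_consensus y_perturbation_le yD0).
- exact: (vspread_window W_ge0 W_row x_consensus x_perturbation_le gD0 dl1 mxprod_W_ge).
- exact: (vspread_window W_ge0 W_row y_consensus y_perturbation_le yD0 dl1 mxprod_W_ge).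
Qed.

Lemma tracking_error_bounded i : exists M, forall k,
  vnorm (vsub (y k i) (vscal (/ INR nI) (vsum (fun j => vscal (phi k j) (y k j))))) <= M.
Proof.
have [M SXY] := vspread_bounded.
exists (INR m * M) => k; apply: vnorm_le_coord => c.
rewrite /vsub /vscal /vsum -rsum_mull -Rabs_Ropp.
rewrite (_ : - _ = rsum (fun l => q k l * y k l c) - y k i c); last first.
  by rewrite /q (eq_rsum (g := fun l => phi k l / INR nI * y k l c)) /Rdiv; [ring | move=> l; ring].
exact: Rle_trans (y_dev_le k i c) (proj2 (SXY k)).
Qed.

Lemma surrogate_gap_bounded i : exists M, forall k, vnorm (vsub (x k i) (xt k i)) <= M.
Proof.
have [M SXY] := vspread_bounded.
exists (K * (M + M + 1)) => k; rewrite vnorm_vsubC.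
apply: Rle_trans (le_bmax (fun j => vnorm (vsub (xt k j) (x k j))) i) _.
apply: Rle_trans (Dx_le k) _; apply: Rmult_le_compat_l; first exact: bmax_ge0.
by have := SXY k; lra.
Qed.
End Sonata.

Theorem mainTheorem17
  (m nI B : nat) (kappa : R)
  (X O : vec m -> Prop)
  (f : 'I_nI -> vec m -> R) (gf : 'I_nI -> vec m -> vec m) (L : 'I_nI -> R)
  (G : vec m -> R)
  (E : nat -> 'I_nI -> 'I_nI -> Prop) (a : nat -> 'I_nI -> 'I_nI -> R)
  (ft : 'I_nI -> vec m -> vec m -> R) (gft : 'I_nI -> vec m -> vec m -> vec m)
  (tau Lt : 'I_nI -> R)
  (gamma : nat -> R) (LF LG : R)
  (x xh xt y : nat -> 'I_nI -> vec m) (phi : nat -> 'I_nI -> R)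
  (* setting *)
  (HI : (2 <= nI)%N) (HB : (0 < B)%N)
  (HXne : exists z, X z) (HXcl : is_closed X) (HXcv : is_convex_set X)
  (HOop : is_open O) (HXO : forall z, X z -> O z)
  (Hf : forall i, C1_on O (f i) (gf i) /\ lipschitz_on X (gf i) (L i))
  (HG : convex_fun_on O G)
  (HV : exists c, forall z, X z -> c <= rsum (fun i => f i z) + G z)
  (Hkappa : 0 < kappa)
  (HE : B_strongly_connected E B)
  (Ha : admissible_weights E a kappa)
  (* Assumption III.14 on the surrogates: ft i z w = f~_i(z | w) *)
  (Hft1 : forall i w, X w -> strongly_convex_on X (fun z => ft i z w) (tau i))
  (Hft2 : forall i w, X w -> C1_on O (fun z => ft i z w) (fun z => gft i z w))
  (Hft3 : forall i w, X w -> gft i w w = gf i w)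
  (Hft4 : forall i z, X z -> lipschitz_on X (fun w => gft i z w) (Lt i))
  (* (A1), (A2), (A3) *)
  (HA1 : forall z, X z -> vnorm (vsum (fun i => gf i z)) <= LF)
  (HA2 : forall z xi, X z -> subgradient O G z xi -> vnorm xi <= LG)
  (HA3a : forall k, 0 < gamma k <= 1)
  (HA3b : cv_infty (fun n => sum_f_R0 gamma n))
  (HA3c : exists l, Un_cv (fun n => sum_f_R0 (fun k => (gamma k) ^ 2) n) l)
  (* SONATA *)
  (Hx0 : forall i, X (x 0%nat i))
  (Hphi0 : forall i, phi 0%nat i = 1)
  (Hy0 : forall i, y 0%nat i = gf i (x 0%nat i))
  (Hxt : forall k i, X (xt k i) /\
     forall z, X z -> sonata_obj ft gf G i (x k i) (y k i) (xt k i)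
                      <= sonata_obj ft gf G i (x k i) (y k i) z)
  (Hxh : forall k i, xh k i = vadd (x k i) (vscal (gamma k) (vsub (xt k i) (x k i))))
  (Hphi : forall k i, phi (S k) i = rsum (fun j => a k i j * phi k j))
  (Hx : forall k i, x (S k) i =
     vscal (/ phi (S k) i) (vsum (fun j => vscal (a k i j * phi k j) (xh k j))))
  (Hy : forall k i, y (S k) i =
     vadd (vscal (/ phi (S k) i) (vsum (fun j => vscal (a k i j * phi k j) (y k j))))
          (vscal (/ phi (S k) i) (vsub (gf i (x (S k) i)) (gf i (x k i))))) :
  let ybar := fun k => vscal (/ INR nI) (vsum (fun j => vscal (phi k j) (y k j))) in
  (* (a) *)
  (0 < kappa ^ (2 * (nI - 1) * B) /\
   forall k i, kappa ^ (2 * (nI - 1) * B) <= phi k i <= INR nI - kappa ^ (2 * (nI - 1) * B)) /\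
  (* (b) *)
  (forall i, exists M, forall k, vnorm (vsub (y k i) (ybar k)) <= M) /\
  (* (c) *)
  (forall i, exists M, forall k, vnorm (vsub (x k i) (xt k i)) <= M).
Proof.
have Hgf i := proj2 (Hf i).
have Hgrad i w Xw := proj1 (Hft2 i w Xw).
move=> ybar; split; [|split] => [|i|i].
- exact: (push_sum_weight_bounds HI HB Hkappa HE Ha Hphi0 Hphi).
- exact: (tracking_error_bounded HI HB HXcv HOop HXO Hgf HG Hkappa HE Ha Hft1 Hgrad Hft3
    HA1 HA2 HA3a HA3c Hx0 Hphi0 Hy0 Hxt Hxh Hphi Hx Hy i).
- exact: (surrogate_gap_bounded HI HB HXcv HOop HXO Hgf HG Hkappa HE Ha Hft1 Hgrad Hft3
    HA1 HA2 HA3a HA3c Hx0 Hphi0 Hy0 Hxt Hxh Hphi Hx Hy i).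
Qed.
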